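(* For each pair $(\mathsf{S},\mathsf{L})\in\{(\mathsf{S.ConstCKID},\mathsf{ConstCKID}),(\mathsf{S.ConstCKMP},\mathsf{ConstCKMP}),(\mathsf{S.ConstCKMPID},\mathsf{ConstCKMPID})\}$, a sequent $\Gamma\Rightarrow\Delta$ is derivable in $\mathsf{S}$ if and only if $\iota(\Gamma\Rightarrow\Delta)$ is derivable in $\mathsf{L}$.
   Context: Language $\mathcal{L}$: formulas $\varphi ::= p \mid \bot \mid \varphi\wedge\varphi \mid \varphi\vee\varphi \mid \varphi\to\varphi \mid \varphi \mathrel{\Box\!\!\to} \varphi \mid \varphi \mathrel{\Diamond\!\!\to}\varphi$; $\neg\varphi:=\varphi\to\bot$, $\top:=\neg\bot$, $\varphi\leftrightarrow\psi:=(\varphi\to\psi)\wedge(\psi\to\varphi)$. Hilbert systems: $\mathsf{ConstCK}$ = any axiomatisation of intuitionistic propositional logic in $\mathcal{L}$ with modus ponens, plus CM$_\Box$: $(\varphi\mathrel{\Box\!\!\to}\psi\wedge\chi)\to(\varphi\mathrel{\Box\!\!\to}\psi)\wedge(\varphi\mathrel{\Box\!\!\to}\chi)$; CC$_\Box$: $(\varphi\mathrel{\Box\!\!\to}\psi)\wedge(\varphi\mathrel{\Box\!\!\to}\chi)\to(\varphi\mathrel{\Box\!\!\to}\psi\wedge\chi)$; CN$_\Box$: $\varphi\mathrel{\Box\!\!\to}\top$; CN$_\Diamond$: $\neg(\varphi\mathrel{\Diamond\!\!\to}\bot)$; CK$_\Diamond$: $(\varphi\mathrel{\Box\!\!\to}(\psi\to\chi))\to((\varphi\mathrel{\Diamond\!\!\to}\psi)\to(\varphi\mathrel{\Diamond\!\!\to}\chi))$;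 rules RA$_\Box$: from $\varphi\leftrightarrow\rho$ infer $(\varphi\mathrel{\Box\!\!\to}\psi)\leftrightarrow(\rho\mathrel{\Box\!\!\to}\psi)$; RC$_\Box$: from $\psi\leftrightarrow\chi$ infer $(\varphi\mathrel{\Box\!\!\to}\psi)\leftrightarrow(\varphi\mathrel{\Box\!\!\to}\chi)$; RA$_\Diamond$, RC$_\Diamond$: the same with $\mathrel{\Diamond\!\!\to}$. $\mathsf{ConstCKID}$ = $\mathsf{ConstCK}$ + ID$_\Box$: $\varphi\mathrel{\Box\!\!\to}\varphi$. $\mathsf{ConstCKMP}$ = $\mathsf{ConstCK}$ + MP$_\Box$: $(\varphi\mathrel{\Box\!\!\to}\psi)\to(\varphi\to\psi)$ + MP$_\Diamond$: $\varphi\wedge\psi\to(\varphi\mathrel{\Diamond\!\!\to}\psi)$. $\mathsf{ConstCKMPID}$ = $\mathsf{ConstCK}$ + MP$_\Box$, MP$_\Diamond$, ID$_\Box$. A sequent $\Gamma\Rightarrow\Delta$ is a pair of finite multisets with $|\Delta|\le1$; $\varphi\Leftrightarrow\rho$ abbreviates $\varphi\Rightarrow\rho$ and $\rho\Rightarrow\varphi$. $\iota(\Gamma\Rightarrow\Delta)=\bigwedge\Gamma\to\bigvee\Delta$ if $\Gamma\neq\emptyset$, $\bigvee\Delta$ otherwise, $\bigvee\emptyset=\bot$. Throughout $0\le|\Delta|\le1$, $n\ge0$. Propositional rules (premisses / conclusion): init: $\Gamma,p\Rightarrow p$; $\bot_L$: $\Gamma,\bot\Rightarrow\Delta$; $\wedge_L$: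 $\Gamma,\varphi,\psi\Rightarrow\Delta$ / $\Gamma,\varphi\wedge\psi\Rightarrow\Delta$; $\wedge_R$: $\Gamma\Rightarrow\varphi$, $\Gamma\Rightarrow\psi$ / $\Gamma\Rightarrow\varphi\wedge\psi$; $\vee_L$: $\Gamma,\varphi\Rightarrow\Delta$, $\Gamma,\psi\Rightarrow\Delta$ / $\Gamma,\varphi\vee\psi\Rightarrow\Delta$; $\vee_R^1$: $\Gamma\Rightarrow\varphi$ / $\Gamma\Rightarrow\varphi\vee\psi$; $\vee_R^2$: $\Gamma\Rightarrow\psi$ / $\Gamma\Rightarrow\varphi\vee\psi$; $\to_R$: $\Gamma,\varphi\Rightarrow\psi$ / $\Gamma\Rightarrow\varphi\to\psi$; $\to_L$: $\Gamma,\varphi\to\psi\Rightarrow\varphi$, $\Gamma,\psi\Rightarrow\Delta$ / $\Gamma,\varphi\to\psi\Rightarrow\Delta$. With $B:=\rho_1\mathrel{\Box\!\!\to}\sigma_1,\dots,\rho_n\mathrel{\Box\!\!\to}\sigma_n$, $E:=\{\varphi\Leftrightarrow\rho_i\}_{i\le n}$: $\Box$: $E$, $\sigma_1,\dots,\sigma_n\Rightarrow\psi$ / $\Gamma,B\Rightarrow\varphi\mathrel{\Box\!\!\to}\psi$; $\Diamond$: $E$, $\varphi\Leftrightarrow\eta$, $\sigma_1,\dots,\sigma_n,\psi\Rightarrow\vartheta$ / $\Gamma,B,\varphi\mathrel{\Diamond\!\!\to}\psi\Rightarrow\eta\mathrel{\Diamond\!\!\to}\vartheta$; $\Box\Diamond$: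 $E$, $\sigma_1,\dots,\sigma_n,\psi\Rightarrow$ / $\Gamma,B,\varphi\mathrel{\Diamond\!\!\to}\psi\Rightarrow\Delta$; $\Box^{id}$: $E$, $\sigma_1,\dots,\sigma_n,\varphi\Rightarrow\psi$ / $\Gamma,B\Rightarrow\varphi\mathrel{\Box\!\!\to}\psi$; $\Box\Diamond^{id}$: $E$, $\sigma_1,\dots,\sigma_n,\varphi,\psi\Rightarrow$ / $\Gamma,B,\varphi\mathrel{\Diamond\!\!\to}\psi\Rightarrow\Delta$; $\Diamond^{id}$: $E$, $\varphi\Leftrightarrow\eta$, $\sigma_1,\dots,\sigma_n,\varphi,\psi\Rightarrow\vartheta$ / $\Gamma,B,\varphi\mathrel{\Diamond\!\!\to}\psi\Rightarrow\eta\mathrel{\Diamond\!\!\to}\vartheta$; $\mathsf{mp}_\Box$: $\Gamma,\varphi\mathrel{\Box\!\!\to}\psi\Rightarrow\varphi$, $\Gamma,\varphi\mathrel{\Box\!\!\to}\psi,\psi\Rightarrow\Delta$ / $\Gamma,\varphi\mathrel{\Box\!\!\to}\psi\Rightarrow\Delta$; $\mathsf{mp}_\Diamond$: $\Gamma\Rightarrow\varphi$, $\Gamma\Rightarrow\psi$ / $\Gamma\Rightarrow\varphi\mathrel{\Diamond\!\!\to}\psi$. Calculi: $\mathsf{S.ConstCKID}$ = propositional + $\Box^{id},\Diamond^{id},\Box\Diamond^{id}$; $\mathsf{S.ConstCKMP}$ = propositional + $\Box,\Diamond,\Box\Diamond,\mathsf{mp}_\Box,\mathsf{mp}_\Diamond$;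 $\mathsf{S.ConstCKMPID}$ = propositional + $\Box^{id},\Diamond^{id},\Box\Diamond^{id},\mathsf{mp}_\Box,\mathsf{mp}_\Diamond$. *)

From Stdlib Require Import List Permutation.
Import ListNotations.

Inductive form : Type :=
| Var : nat -> form
| Bot : form
| And : form -> form -> form
| Or  : form -> form -> form
| Imp : form -> form -> form
| BoxArr : form -> form -> form
| DiaArr : form -> form -> form.

Definition Neg (a : form) : form := Imp a Bot.
Definition Top : form := Neg Bot.
Definition Iff (a b : form) : form := And (Imp a b) (Imp b a).

Inductive logic : Type := ConstCKID | ConstCKMP | ConstCKMPID.

Definition has_id (L : logic) : bool :=
  match L with ConstCKID | ConstCKMPID => true | ConstCKMP => false end.
Definition has_mp (L : logic) : bool :=
  match L with ConstCKMP | ConstCKMPID => true | ConstCKID => false end.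

Inductive hderiv (L : logic) : form -> Prop :=
| h_A1 a b : hderiv L (Imp a (Imp b a))
| h_A2 a b c : hderiv L (Imp (Imp a (Imp b c)) (Imp (Imp a b) (Imp a c)))
| h_A3 a b : hderiv L (Imp (And a b) a)
| h_A4 a b : hderiv L (Imp (And a b) b)
| h_A5 a b : hderiv L (Imp a (Imp b (And a b)))
| h_A6 a b : hderiv L (Imp a (Or a b))
| h_A7 a b : hderiv L (Imp b (Or a b))
| h_A8 a b c : hderiv L (Imp (Imp a c) (Imp (Imp b c) (Imp (Or a b) c)))
| h_A9 a : hderiv L (Imp Bot a)
| h_MP a b : hderiv L (Imp a b) -> hderiv L a -> hderiv L b
| h_CMbox a b c :
    hderiv L (Imp (BoxArr a (And b c)) (And (BoxArr a b) (BoxArr a c)))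
| h_CCbox a b c :
    hderiv L (Imp (And (BoxArr a b) (BoxArr a c)) (BoxArr a (And b c)))
| h_CNbox a : hderiv L (BoxArr a Top)
| h_CNdia a : hderiv L (Neg (DiaArr a Bot))
| h_CKdia a b c :
    hderiv L (Imp (BoxArr a (Imp b c)) (Imp (DiaArr a b) (DiaArr a c)))
| h_RAbox a r b : hderiv L (Iff a r) -> hderiv L (Iff (BoxArr a b) (BoxArr r b))
| h_RCbox a b c : hderiv L (Iff b c) -> hderiv L (Iff (BoxArr a b) (BoxArr a c))
| h_RAdia a r b : hderiv L (Iff a r) -> hderiv L (Iff (DiaArr a b) (DiaArr r b))
| h_RCdia a b c : hderiv L (Iff b c) -> hderiv L (Iff (DiaArr a b) (DiaArr a c))
| h_IDbox a : has_id L = true -> hderiv L (BoxArr a a)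
| h_MPbox a b : has_mp L = true -> hderiv L (Imp (BoxArr a b) (Imp a b))
| h_MPdia a b : has_mp L = true -> hderiv L (Imp (And a b) (DiaArr a b)).

(** * Sequents: antecedent is a multiset, represented by a list; every rule
    conclusion is taken up to permutation of the antecedent.  The succedent
    Δ with |Δ| ≤ 1 is an [option form]. *)

Definition big_and (G : list form) : form :=
  match G with
  | [] => Top
  | a :: l => fold_left And l a
  end.

Definition big_or (D : option form) : form :=
  match D with None => Bot | Some a => a end.

Definition iota (G : list form) (D : option form) : form :=
  match G with
  | [] => big_or D
  | _ :: _ => Imp (big_and G) (big_or D)
  end.

Definition boxes (B : list (form * form)) : list form :=
  map (fun p => BoxArr (fst p) (snd p)) B.
Definition sigmas (B : list (form * form)) : list form := map snd B.

Inductive sderiv (L : logic) : list form -> option form -> Prop :=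
| s_init G p G' :
    Permutation G' (Var p :: G) -> sderiv L G' (Some (Var p))
| s_botL G D G' :
    Permutation G' (Bot :: G) -> sderiv L G' D
| s_andL G a b D G' :
    sderiv L (a :: b :: G) D ->
    Permutation G' (And a b :: G) -> sderiv L G' D
| s_andR G a b :
    sderiv L G (Some a) -> sderiv L G (Some b) -> sderiv L G (Some (And a b))
| s_orL G a b D G' :
    sderiv L (a :: G) D -> sderiv L (b :: G) D ->
    Permutation G' (Or a b :: G) -> sderiv L G' D
| s_orR1 G a b : sderiv L G (Some a) -> sderiv L G (Some (Or a b))
| s_orR2 G a b : sderiv L G (Some b) -> sderiv L G (Some (Or a b))
| s_impR G a b : sderiv L (a :: G) (Some b) -> sderiv L G (Some (Imp a b))
| s_impL G a b D G' :
    sderiv L (Imp a b :: G) (Some a) -> sderiv L (b :: G) D ->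
    Permutation G' (Imp a b :: G) -> sderiv L G' D
| s_box G B a b G' :
    has_id L = false ->
    (forall r s, In (r, s) B -> sderiv L [a] (Some r) /\ sderiv L [r] (Some a)) ->
    sderiv L (sigmas B) (Some b) ->
    Permutation G' (G ++ boxes B) -> sderiv L G' (Some (BoxArr a b))
| s_dia G B a b e t G' :
    has_id L = false ->
    (forall r s, In (r, s) B -> sderiv L [a] (Some r) /\ sderiv L [r] (Some a)) ->
    sderiv L [a] (Some e) -> sderiv L [e] (Some a) ->
    sderiv L (sigmas B ++ [b]) (Some t) ->
    Permutation G' (G ++ boxes B ++ [DiaArr a b]) -> sderiv L G' (Some (DiaArr e t))
| s_boxdia G B a b D G' :
    has_id L = false ->
    (forall r s, In (r, s) B -> sderiv L [a] (Some r) /\ sderiv L [r] (Some a)) ->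
    sderiv L (sigmas B ++ [b]) None ->
    Permutation G' (G ++ boxes B ++ [DiaArr a b]) -> sderiv L G' D
| s_box_id G B a b G' :
    has_id L = true ->
    (forall r s, In (r, s) B -> sderiv L [a] (Some r) /\ sderiv L [r] (Some a)) ->
    sderiv L (sigmas B ++ [a]) (Some b) ->
    Permutation G' (G ++ boxes B) -> sderiv L G' (Some (BoxArr a b))
| s_dia_id G B a b e t G' :
    has_id L = true ->
    (forall r s, In (r, s) B -> sderiv L [a] (Some r) /\ sderiv L [r] (Some a)) ->
    sderiv L [a] (Some e) -> sderiv L [e] (Some a) ->
    sderiv L (sigmas B ++ [a; b]) (Some t) ->
    Permutation G' (G ++ boxes B ++ [DiaArr a b]) -> sderiv L G' (Some (DiaArr e t))
| s_boxdia_id G B a b D G' :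
    has_id L = true ->
    (forall r s, In (r, s) B -> sderiv L [a] (Some r) /\ sderiv L [r] (Some a)) ->
    sderiv L (sigmas B ++ [a; b]) None ->
    Permutation G' (G ++ boxes B ++ [DiaArr a b]) -> sderiv L G' D
| s_mp_box G a b D G' :
    has_mp L = true ->
    sderiv L (BoxArr a b :: G) (Some a) ->
    sderiv L (BoxArr a b :: b :: G) D ->
    Permutation G' (BoxArr a b :: G) -> sderiv L G' D
| s_mp_dia G a b :
    has_mp L = true ->
    sderiv L G (Some a) -> sderiv L G (Some b) -> sderiv L G (Some (DiaArr a b)).

(* Soundness is checked rule by rule, reading the antecedent as hypotheses of the Hilbert system:
   the deduction theorem handles the propositional rules, and a modal rule with premiss
   [σ_1, ..., σ_n (, φ) ⇒ ψ] is validated by collecting the boxes with CC□/CN□, aligning each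
   [ρ_i] with [φ] by RA□, applying RC□ with CM□ (monotonicity) and ID□; the diamond rules add CK◇,
   RA◇ and CN◇.

   Completeness reduces to cut admissibility, as every other axiom and rule of the Hilbert system
   has a cut-free derivation.  Cut is eliminated by induction on the cut formula and then on the
   two derivations, once the propositional left rules are shown invertible and weakening and
   contraction admissible, so that antecedents may be treated as sets.  In a principal cut on
   [φ □→ ψ], the box block of the left premiss replaces the pair [(φ, ψ)] in the block of the
   right premiss, at the cost of cuts on [φ] and [ψ]; a diamond introduced by mp◇ is cut by
   applying mp□ to every box of the other premiss. *)

From Stdlib Require Import List Permutation Lia.
Import ListNotations.

Arguments boxes : simpl never.
Arguments sigmas : simpl never.

(** * Lists of formulas as multisets *)

Definition form_eq_dec (x y : form) : {x = y} + {x <> y}.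
Proof. decide equality; apply PeanoNat.Nat.eq_dec. Defined.

Definition pair_eq_dec (p q : form * form) : {p = q} + {p <> q}.
Proof. decide equality; apply form_eq_dec. Defined.

Lemma boxes_nil : boxes [] = [].
Proof. reflexivity. Qed.

Lemma boxes_cons p B : boxes (p :: B) = BoxArr (fst p) (snd p) :: boxes B.
Proof. reflexivity. Qed.

Lemma boxes_app B1 B2 : boxes (B1 ++ B2) = boxes B1 ++ boxes B2.
Proof. apply map_app. Qed.

Lemma sigmas_nil : sigmas [] = [].
Proof. reflexivity. Qed.

Lemma sigmas_cons p B : sigmas (p :: B) = snd p :: sigmas B.
Proof. reflexivity. Qed.

Lemma sigmas_app B1 B2 : sigmas (B1 ++ B2) = sigmas B1 ++ sigmas B2.
Proof. apply map_app. Qed.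

Lemma in_boxes x B : In x (boxes B) <-> exists r s, x = BoxArr r s /\ In (r, s) B.
Proof.
  unfold boxes; rewrite in_map_iff; split.
  - intros ([r s] & <- & Hin); eauto.
  - intros (r & s & -> & Hin); now exists (r, s).
Qed.

Lemma in_sigmas s B : In s (sigmas B) <-> exists r, In (r, s) B.
Proof.
  unfold sigmas; rewrite in_map_iff; split.
  - intros ([r s'] & <- & Hin); eauto.
  - intros (r & Hin); now exists (r, s).
Qed.

Lemma count_occ_cons_if x l y :
  count_occ form_eq_dec (x :: l) y = (if form_eq_dec x y then 1 else 0) + count_occ form_eq_dec l y.
Proof. simpl; destruct (form_eq_dec x y); lia. Qed.

(* [solve_perm] and [solve_incl] would diverge on goals containing existential variables. *)
Ltac no_evar_goal := match goal with |- ?g => tryif has_evar g then fail 1 else idtac end.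

Ltac solve_perm :=
  no_evar_goal;
  rewrite ?boxes_app, ?sigmas_app, ?boxes_cons, ?sigmas_cons, ?boxes_nil, ?sigmas_nil in *;
  cbn [fst snd] in *;
  apply (proj2 (Permutation_count_occ form_eq_dec _ _)); let y := fresh "y" in intro y;
  repeat match goal with
         | H : Permutation _ _ |- _ =>
             let H' := fresh in
             pose proof (proj1 (Permutation_count_occ form_eq_dec _ _) H y) as H';
             clear H; revert H'
         end;
  rewrite ?count_occ_cons_if, ?count_occ_app; cbn [count_occ];
  repeat match goal with
         | |- context [form_eq_dec ?a ?b] => destruct (form_eq_dec a b)
         end; intros; lia.

Ltac solve_incl :=
  no_evar_goal;
  let x := fresh in let Hx := fresh in intros x Hx;
  repeat match goal with H : incl _ _ |- _ => specialize (H x); revert H end;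
  simpl in *; repeat rewrite in_app_iff in *; simpl in *; intros;
  repeat match goal with H : _ \/ _ |- _ => destruct H end; subst; tauto.

Ltac solve_in :=
  match goal with |- In ?x ?Y => apply (fun H : incl [x] Y => H x (in_eq x [])); solve_incl end.

Lemma Permutation_incl {T : Type} (l l' : list T) : Permutation l l' -> incl l' l.
Proof. intros P x Hx; exact (Permutation_in _ (Permutation_sym P) Hx). Qed.

Lemma Permutation_incl_cons {G' K Y : list form} {X : form} :
  Permutation G' (X :: K) -> incl G' Y -> In X Y /\ incl K Y.
Proof.
  intros HP Hi; split; [apply Hi, (Permutation_in _ (Permutation_sym HP)), in_eq|].
  intros z Hz; apply Hi, (Permutation_in _ (Permutation_sym HP)), in_cons, Hz.
Qed.

Lemma Permutation_cons_cases {X A : form} {G H : list form} :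
  Permutation (X :: G) (A :: H) ->
  (X = A /\ Permutation G H) \/ (exists K, Permutation G (A :: K) /\ Permutation H (X :: K)).
Proof.
  intros HP; destruct (form_eq_dec X A) as [->|Hne].
  - left; split; [reflexivity|exact (Permutation_cons_inv HP)].
  - right; destruct (Permutation_in A (Permutation_sym HP) (in_eq _ _)) as [->|Hin];
      [congruence|].
    destruct (in_split _ _ Hin) as (l1 & l2 & ->).
    exists (l1 ++ l2); split; [solve_perm|].
    apply (Permutation_cons_inv (a := A)).
    eapply Permutation_trans; [apply Permutation_sym, HP|solve_perm].
Qed.

Lemma Permutation_cons_cons_cases {X A : form} {G H : list form} :
  Permutation (X :: G) (A :: A :: H) ->
  (X = A /\ Permutation G (A :: H)) \/
  (exists K, Permutation G (A :: A :: K) /\ Permutation H (X :: K)).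
Proof.
  intros HP; destruct (form_eq_dec X A) as [->|Hne].
  - left; split; [reflexivity|exact (Permutation_cons_inv HP)].
  - right; destruct (Permutation_cons_cases HP) as [[E _]|(K1 & H1 & H2)]; [congruence|].
    destruct (Permutation_cons_cases (Permutation_sym H2)) as [[E _]|(K & H3 & H4)]; [congruence|].
    exists K; split; solve_perm.
Qed.

Lemma Permutation_app_cons_not_in {G' G R : list form} {A : form} {H : list form} :
  Permutation G' (G ++ R) -> Permutation G' (A :: H) -> ~ In A R ->
  exists G0, Permutation G (A :: G0) /\ Permutation H (G0 ++ R).
Proof.
  intros H1 H2 Hn.
  assert (Hin : In A (G ++ R))
    by (apply (Permutation_in _ H1), (Permutation_in _ (Permutation_sym H2)); now left).
  apply in_app_or in Hin as [Hin|Hin]; [|contradiction].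
  destruct (in_split _ _ Hin) as (l1 & l2 & ->).
  exists (l1 ++ l2); split; [solve_perm|].
  apply (Permutation_cons_inv (a := A)); eapply Permutation_trans; [apply Permutation_sym, H2|].
  eapply Permutation_trans; [apply H1|solve_perm].
Qed.

Lemma in_boxes_Permutation r s B :
  In (BoxArr r s) (boxes B) -> exists B0, Permutation B ((r, s) :: B0).
Proof.
  intros (r' & s' & [= <- <-] & Hin)%in_boxes.
  destruct (in_split _ _ Hin) as (l1 & l2 & ->).
  exists (l1 ++ l2); apply Permutation_sym, Permutation_middle.
Qed.

Lemma Permutation_boxes B B' : Permutation B B' -> Permutation (boxes B) (boxes B').
Proof. apply Permutation_map. Qed.

Lemma dia_not_in_boxes c d B : ~ In (DiaArr c d) (boxes B).
Proof. intros (? & ? & ? & _)%in_boxes; discriminate. Qed.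

Lemma count_occ_boxes_dup B r s :
  count_occ form_eq_dec (boxes B) (BoxArr r s) >= 2 ->
  exists B0, Permutation B ((r, s) :: (r, s) :: B0).
Proof.
  intros Hc.
  assert (Hin : forall B, count_occ form_eq_dec (boxes B) (BoxArr r s) > 0 ->
                  exists B0, Permutation B ((r, s) :: B0))
    by (intros B' HB'; apply in_boxes_Permutation, (count_occ_In form_eq_dec), HB').
  destruct (Hin B ltac:(lia)) as (B1 & HB1).
  pose proof (Permutation_count_occ form_eq_dec (boxes B) (boxes ((r, s) :: B1))) as [E _].
  specialize (E (Permutation_boxes _ _ HB1) (BoxArr r s)).
  rewrite boxes_cons, count_occ_cons_eq in E by reflexivity.
  destruct (Hin B1 ltac:(cbn [fst snd] in E; lia)) as (B0 & HB0).
  exists B0; eapply Permutation_trans; [exact HB1|constructor; exact HB0].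
Qed.

Lemma modal_context_dup_cases {G B T A H} :
  (T = [] \/ exists c d, T = [DiaArr c d]) ->
  Permutation (G ++ boxes B ++ T) (A :: A :: H) ->
  (exists G0, Permutation (A :: H) (G0 ++ boxes B ++ T)) \/
  (exists r s B0, A = BoxArr r s /\ Permutation B ((r, s) :: (r, s) :: B0) /\
                  Permutation H (G ++ boxes B0 ++ T)).
Proof.
  intros HT HP; destruct (in_dec form_eq_dec A G) as [HinG|HnG].
  - left; destruct (in_split _ _ HinG) as (l1 & l2 & ->).
    exists (l1 ++ l2); solve_perm.
  - right.
    assert (Hc : count_occ form_eq_dec (boxes B) A >= 2).
    { pose proof (proj1 (Permutation_count_occ form_eq_dec _ _) HP A) as Hc.
      rewrite !count_occ_app, (proj1 (count_occ_not_In _ _ _) HnG), !count_occ_cons_eq in Hc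
        by reflexivity.
      destruct HT as [->|(c & d & ->)]; [simpl in Hc; lia|].
      rewrite count_occ_cons_if in Hc.
      destruct (form_eq_dec (DiaArr c d) A) as [<-|]; [|simpl in Hc; lia].
      exfalso; rewrite (proj1 (count_occ_not_In _ _ _) (dia_not_in_boxes c d B)) in Hc.
      simpl in Hc; lia. }
    destruct (in_boxes A B) as [Hbox _].
    destruct (Hbox (proj2 (count_occ_In form_eq_dec (boxes B) A) ltac:(lia))) as (r & s & -> & _).
    destruct (count_occ_boxes_dup B r s Hc) as (B0 & HB0).
    exists r, s, B0; split; [reflexivity|split; [exact HB0|]].
    pose proof (Permutation_boxes _ _ HB0); solve_perm.
Qed.

Lemma box_context_dup_cases {G' G B A H} :
  Permutation G' (G ++ boxes B) -> Permutation G' (A :: A :: H) ->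
  (exists G0, Permutation (A :: H) (G0 ++ boxes B)) \/
  (exists r s B0, A = BoxArr r s /\ Permutation B ((r, s) :: (r, s) :: B0) /\
                  Permutation H (G ++ boxes B0)).
Proof.
  intros HP HG; rewrite <- (app_nil_r (boxes B)) in HP.
  destruct (modal_context_dup_cases (or_introl eq_refl) (Permutation_trans (Permutation_sym HP) HG))
    as [(G0 & HH)|(r & s & B0 & HA & HB & HH)]; rewrite app_nil_r in HH; [left|right]; eauto 6.
Qed.

Lemma dia_context_dup_cases {G' G B c d A H} :
  Permutation G' (G ++ boxes B ++ [DiaArr c d]) -> Permutation G' (A :: A :: H) ->
  (exists G0, Permutation (A :: H) (G0 ++ boxes B ++ [DiaArr c d])) \/
  (exists r s B0, A = BoxArr r s /\ Permutation B ((r, s) :: (r, s) :: B0) /\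
                  Permutation H (G ++ boxes B0 ++ [DiaArr c d])).
Proof.
  intros HP HG.
  destruct (modal_context_dup_cases (or_intror (ex_intro _ c (ex_intro _ d eq_refl)))
              (Permutation_trans (Permutation_sym HP) HG))
    as [(G0 & HH)|HB]; [left; exists G0; exact HH|right; exact HB].
Qed.

Lemma incl_cons_dup {X : Type} (x : X) l B : Permutation B (x :: x :: l) -> incl (x :: l) B.
Proof. intros HB y Hy; apply (Permutation_in _ (Permutation_sym HB)); destruct Hy; simpl; auto. Qed.

Lemma boxes_incl_not_in A B G : ~ In A (boxes B) -> incl (boxes B) (A :: G) -> incl (boxes B) G.
Proof. intros Hn HB x Hx; destruct (HB x Hx) as [->|HG]; [contradiction|exact HG]. Qed.

Lemma boxes_remove_incl a b B G :
  incl (boxes B) (BoxArr a b :: G) -> incl (boxes (remove pair_eq_dec (a, b) B)) G.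
Proof.
  intros HB x (r & s & -> & (Hin & Hne)%in_remove)%in_boxes.
  destruct (HB (BoxArr r s)) as [[= -> ->]|HG]; [apply in_boxes; eauto|congruence|exact HG].
Qed.

Lemma sigmas_remove_incl a b B :
  incl (sigmas B) (b :: sigmas (remove pair_eq_dec (a, b) B)).
Proof.
  intros s (r & Hin)%in_sigmas.
  destruct (pair_eq_dec (r, s) (a, b)) as [[= -> ->]|Hne]; [left; reflexivity|right].
  apply in_sigmas; exists r; apply in_in_remove; assumption.
Qed.

(** * Modal rules with and without ID *)

(* The ID variants of the modal rules add the antecedent [φ] to their premisses. *)
Definition id_hyp (L : logic) (a : form) : list form := if has_id L then [a] else [].

Definition interderiv (P : list form -> option form -> Prop) (a r : form) : Prop :=
  P [a] (Some r) /\ P [r] (Some a).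

Definition interderiv_all (P : list form -> option form -> Prop) (a : form)
    (B : list (form * form)) : Prop :=
  forall r s, In (r, s) B -> interderiv P a r.

Lemma id_hyp_false L a : has_id L = false -> id_hyp L a = [].
Proof. unfold id_hyp; intros ->; reflexivity. Qed.

Lemma id_hyp_true L a : has_id L = true -> id_hyp L a = [a].
Proof. unfold id_hyp; intros ->; reflexivity. Qed.

Lemma sderiv_box L G B a b G' :
  interderiv_all (sderiv L) a B -> sderiv L (sigmas B ++ id_hyp L a) (Some b) ->
  Permutation G' (G ++ boxes B) -> sderiv L G' (Some (BoxArr a b)).
Proof.
  unfold interderiv_all, interderiv in *; destruct (has_id L) eqn:E; intros HB Hd HP.
  - rewrite id_hyp_true in Hd by exact E. eapply s_box_id; eassumption.
  - rewrite id_hyp_false, app_nil_r in Hd by exact E. eapply s_box; eassumption.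
Qed.

Lemma sderiv_dia L G B a b e t G' :
  interderiv_all (sderiv L) a B -> interderiv (sderiv L) a e ->
  sderiv L (sigmas B ++ id_hyp L a ++ [b]) (Some t) ->
  Permutation G' (G ++ boxes B ++ [DiaArr a b]) -> sderiv L G' (Some (DiaArr e t)).
Proof.
  unfold interderiv_all, interderiv in *; destruct (has_id L) eqn:E; intros HB [Hae Hea] Hd HP.
  - rewrite id_hyp_true in Hd by exact E. exact (s_dia_id L G B a b e t G' E HB Hae Hea Hd HP).
  - rewrite id_hyp_false in Hd by exact E. eapply s_dia; eassumption.
Qed.

Lemma sderiv_boxdia L G B a b D G' :
  interderiv_all (sderiv L) a B -> sderiv L (sigmas B ++ id_hyp L a ++ [b]) None ->
  Permutation G' (G ++ boxes B ++ [DiaArr a b]) -> sderiv L G' D.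
Proof.
  unfold interderiv_all, interderiv in *; destruct (has_id L) eqn:E; intros HB Hd HP.
  - rewrite id_hyp_true in Hd by exact E. exact (s_boxdia_id L G B a b D G' E HB Hd HP).
  - rewrite id_hyp_false in Hd by exact E. eapply s_boxdia; eassumption.
Qed.

Ltac interderiv_ih F HB :=
  intros ? ? Hin; destruct (HB _ _ Hin) as [x y]; exact (conj (F _ _ x) (F _ _ y)).

Section UnifiedInduction.

Variables (L : logic) (P : list form -> option form -> Prop).

Hypotheses
  (P_init : forall G p G', Permutation G' (Var p :: G) -> P G' (Some (Var p)))
  (P_botL : forall G D G', Permutation G' (Bot :: G) -> P G' D)
  (P_andL : forall G a b D G', sderiv L (a :: b :: G) D -> P (a :: b :: G) D ->
     Permutation G' (And a b :: G) -> P G' D)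
  (P_andR : forall G a b, sderiv L G (Some a) -> P G (Some a) ->
     sderiv L G (Some b) -> P G (Some b) -> P G (Some (And a b)))
  (P_orL : forall G a b D G', sderiv L (a :: G) D -> P (a :: G) D ->
     sderiv L (b :: G) D -> P (b :: G) D -> Permutation G' (Or a b :: G) -> P G' D)
  (P_orR1 : forall G a b, sderiv L G (Some a) -> P G (Some a) -> P G (Some (Or a b)))
  (P_orR2 : forall G a b, sderiv L G (Some b) -> P G (Some b) -> P G (Some (Or a b)))
  (P_impR : forall G a b, sderiv L (a :: G) (Some b) -> P (a :: G) (Some b) ->
     P G (Some (Imp a b)))
  (P_impL : forall G a b D G', sderiv L (Imp a b :: G) (Some a) -> P (Imp a b :: G) (Some a) ->
     sderiv L (b :: G) D -> P (b :: G) D -> Permutation G' (Imp a b :: G) -> P G' D)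
  (P_box : forall G B a b G',
     interderiv_all (sderiv L) a B -> interderiv_all P a B ->
     sderiv L (sigmas B ++ id_hyp L a) (Some b) -> P (sigmas B ++ id_hyp L a) (Some b) ->
     Permutation G' (G ++ boxes B) -> P G' (Some (BoxArr a b)))
  (P_dia : forall G B a b e t G',
     interderiv_all (sderiv L) a B -> interderiv_all P a B ->
     interderiv (sderiv L) a e -> interderiv P a e ->
     sderiv L (sigmas B ++ id_hyp L a ++ [b]) (Some t) ->
     P (sigmas B ++ id_hyp L a ++ [b]) (Some t) ->
     Permutation G' (G ++ boxes B ++ [DiaArr a b]) -> P G' (Some (DiaArr e t)))
  (P_boxdia : forall G B a b D G',
     interderiv_all (sderiv L) a B -> interderiv_all P a B ->
     sderiv L (sigmas B ++ id_hyp L a ++ [b]) None -> P (sigmas B ++ id_hyp L a ++ [b]) None ->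
     Permutation G' (G ++ boxes B ++ [DiaArr a b]) -> P G' D)
  (P_mpbox : forall G a b D G', has_mp L = true ->
     sderiv L (BoxArr a b :: G) (Some a) -> P (BoxArr a b :: G) (Some a) ->
     sderiv L (BoxArr a b :: b :: G) D -> P (BoxArr a b :: b :: G) D ->
     Permutation G' (BoxArr a b :: G) -> P G' D)
  (P_mpdia : forall G a b, has_mp L = true ->
     sderiv L G (Some a) -> P G (Some a) -> sderiv L G (Some b) -> P G (Some b) ->
     P G (Some (DiaArr a b))).

(* Unlike [sderiv_ind], this principle merges each modal rule with its ID variant and also
   provides induction hypotheses for the premisses [φ ⇔ ρ_i] of the modal rules. *)
Fixpoint sderiv_ind_unified G D (d : sderiv L G D) {struct d} : P G D.
Proof.
  destruct d as [G p G' HP | G D G' HP | G a b D G' d HP | G a b d1 d2 | G a b D G' d1 d2 HP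
    | G a b d | G a b d | G a b d | G a b D G' d1 d2 HP
    | G B a b G' Hid HB d HP | G B a b e t G' Hid HB d1 d2 d HP | G B a b D G' Hid HB d HP
    | G B a b G' Hid HB d HP | G B a b e t G' Hid HB d1 d2 d HP | G B a b D G' Hid HB d HP
    | G a b D G' Hmp d1 d2 HP | G a b Hmp d1 d2].
  - exact (P_init _ _ _ HP).
  - exact (P_botL _ _ _ HP).
  - exact (P_andL _ _ _ _ _ d (sderiv_ind_unified _ _ d) HP).
  - exact (P_andR _ _ _ d1 (sderiv_ind_unified _ _ d1) d2 (sderiv_ind_unified _ _ d2)).
  - exact (P_orL _ _ _ _ _ d1 (sderiv_ind_unified _ _ d1) d2 (sderiv_ind_unified _ _ d2) HP).
  - exact (P_orR1 _ _ _ d (sderiv_ind_unified _ _ d)).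
  - exact (P_orR2 _ _ _ d (sderiv_ind_unified _ _ d)).
  - exact (P_impR _ _ _ d (sderiv_ind_unified _ _ d)).
  - exact (P_impL _ _ _ _ _ d1 (sderiv_ind_unified _ _ d1) d2 (sderiv_ind_unified _ _ d2) HP).
  - apply (P_box G B a b G' HB); rewrite ?(id_hyp_false L a Hid), ?app_nil_r;
      [interderiv_ih sderiv_ind_unified HB | exact d | exact (sderiv_ind_unified _ _ d) | exact HP].
  - apply (P_dia G B a b e t G' HB); rewrite ?(id_hyp_false L a Hid);
      [interderiv_ih sderiv_ind_unified HB | split; assumption
      | exact (conj (sderiv_ind_unified _ _ d1) (sderiv_ind_unified _ _ d2))
      | exact d | exact (sderiv_ind_unified _ _ d) | exact HP].
  - apply (P_boxdia G B a b D G' HB); rewrite ?(id_hyp_false L a Hid);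
      [interderiv_ih sderiv_ind_unified HB | exact d | exact (sderiv_ind_unified _ _ d) | exact HP].
  - apply (P_box G B a b G' HB); rewrite ?(id_hyp_true L a Hid);
      [interderiv_ih sderiv_ind_unified HB | exact d | exact (sderiv_ind_unified _ _ d) | exact HP].
  - apply (P_dia G B a b e t G' HB); rewrite ?(id_hyp_true L a Hid);
      [interderiv_ih sderiv_ind_unified HB | split; assumption
      | exact (conj (sderiv_ind_unified _ _ d1) (sderiv_ind_unified _ _ d2))
      | exact d | exact (sderiv_ind_unified _ _ d) | exact HP].
  - apply (P_boxdia G B a b D G' HB); rewrite ?(id_hyp_true L a Hid);
      [interderiv_ih sderiv_ind_unified HB | exact d | exact (sderiv_ind_unified _ _ d) | exact HP].
  - exact (P_mpbox _ _ _ _ _ Hmp d1 (sderiv_ind_unified _ _ d1) d2 (sderiv_ind_unified _ _ d2) HP).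
  - exact (P_mpdia _ _ _ Hmp d1 (sderiv_ind_unified _ _ d1) d2 (sderiv_ind_unified _ _ d2)).
Qed.

End UnifiedInduction.

(** * Structural rules *)

Lemma sderiv_perm L G D : sderiv L G D -> forall G', Permutation G G' -> sderiv L G' D.
Proof.
  induction 1 using sderiv_ind_unified; intros G'' HP.
  - eapply (s_init _ G); solve_perm.
  - eapply (s_botL _ G); solve_perm.
  - eapply (s_andL _ G a b); [eassumption|solve_perm].
  - apply s_andR; auto.
  - eapply (s_orL _ G a b); [eassumption|eassumption|solve_perm].
  - apply s_orR1; auto.
  - apply s_orR2; auto.
  - apply s_impR; apply IHsderiv; solve_perm.
  - eapply (s_impL _ G a b); [eassumption|eassumption|solve_perm].
  - eapply (sderiv_box _ G); [eassumption|eassumption|solve_perm].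
  - eapply (sderiv_dia _ G); [eassumption|eassumption|eassumption|solve_perm].
  - eapply (sderiv_boxdia _ G); [eassumption|eassumption|solve_perm].
  - eapply (s_mp_box _ G); [eassumption|eassumption|eassumption|solve_perm].
  - apply s_mp_dia; auto.
Qed.

Lemma sderiv_weaken L G D x : sderiv L G D -> sderiv L (x :: G) D.
Proof.
  intros Hd; revert x; induction Hd using sderiv_ind_unified; intros x.
  - eapply (s_init _ (x :: G)); solve_perm.
  - eapply (s_botL _ (x :: G)); solve_perm.
  - eapply (s_andL _ (x :: G) a b); [eapply sderiv_perm; [apply (IHHd x)|solve_perm]|solve_perm].
  - apply s_andR; auto.
  - eapply (s_orL _ (x :: G) a b); [| |solve_perm].
    + eapply sderiv_perm; [apply (IHHd1 x)|solve_perm].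
    + eapply sderiv_perm; [apply (IHHd2 x)|solve_perm].
  - apply s_orR1; auto.
  - apply s_orR2; auto.
  - apply s_impR; eapply sderiv_perm; [apply (IHHd x)|solve_perm].
  - eapply (s_impL _ (x :: G) a b); [| |solve_perm].
    + eapply sderiv_perm; [apply (IHHd1 x)|solve_perm].
    + eapply sderiv_perm; [apply (IHHd2 x)|solve_perm].
  - eapply (sderiv_box _ (x :: G)); [eassumption|eassumption|solve_perm].
  - eapply (sderiv_dia _ (x :: G)); [eassumption|eassumption|eassumption|solve_perm].
  - eapply (sderiv_boxdia _ (x :: G)); [eassumption|eassumption|solve_perm].
  - eapply (s_mp_box _ (x :: G) a b); [assumption| | |solve_perm].
    + eapply sderiv_perm; [apply (IHHd1 x)|solve_perm].
    + eapply sderiv_perm; [apply (IHHd2 x)|solve_perm].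
  - apply s_mp_dia; auto.
Qed.

Lemma sderiv_weaken_app L G D H : sderiv L G D -> sderiv L (H ++ G) D.
Proof. intros Hd; induction H; simpl; auto using sderiv_weaken. Qed.

Lemma sderiv_empty_succ L G D : sderiv L G None -> sderiv L G D.
Proof.
  remember None as N eqn:E; intros Hd; revert E.
  induction Hd using sderiv_ind_unified; intros E; try discriminate.
  - eapply s_botL; eassumption.
  - eapply (s_andL _ G a b); auto.
  - eapply (s_orL _ G a b); auto.
  - eapply (s_impL _ G a b); auto.
  - eapply sderiv_boxdia; eassumption.
  - eapply (s_mp_box _ G a b); auto.
Qed.

Lemma sderiv_refl L a G : sderiv L (a :: G) (Some a).
Proof.
  revert G; induction a as [p| |a1 IH1 a2 IH2|a1 IH1 a2 IH2|a1 IH1 a2 IH2|a1 IH1 a2 IH2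
    |a1 IH1 a2 IH2]; intros G.
  - eapply s_init; reflexivity.
  - eapply s_botL; reflexivity.
  - eapply s_andL; [|reflexivity].
    apply s_andR; [apply IH1|eapply sderiv_perm; [apply (IH2 (a1 :: G))|solve_perm]].
  - eapply s_orL; [apply s_orR1, IH1|apply s_orR2, IH2|reflexivity].
  - apply s_impR; eapply (s_impL _ (a1 :: G) a1 a2); [|apply IH2|solve_perm].
    eapply sderiv_perm; [apply (IH1 (Imp a1 a2 :: G))|solve_perm].
  - apply (sderiv_box L G [(a1, a2)]); [|apply IH2|solve_perm].
    intros r s [[= <- <-]|[]]; split; apply IH1.
  - apply (sderiv_dia L G [] a1 a2); [intros r s []|split; apply IH1| |solve_perm].
    eapply sderiv_perm; [apply (IH2 (id_hyp L a1))|solve_perm].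
Qed.

Definition propositional_compound (A : form) : Prop :=
  match A with And _ _ | Or _ _ | Imp _ _ => True | _ => False end.

Lemma propositional_compound_not_in_boxes A B :
  propositional_compound A -> ~ In A (boxes B).
Proof. intros HA Hin; apply in_boxes in Hin as (r & s & -> & _); exact HA. Qed.

Lemma propositional_compound_not_in_boxes_dia A B c d :
  propositional_compound A -> ~ In A (boxes B ++ [DiaArr c d]).
Proof.
  intros HA Hin; apply in_app_or in Hin as [Hin|[<-|[]]];
    [exact (propositional_compound_not_in_boxes A B HA Hin)|exact HA].
Qed.

Definition left_premisses L A G D : Prop :=
  match A with
  | And a b => sderiv L (a :: b :: G) D
  | Or a b => sderiv L (a :: G) D /\ sderiv L (b :: G) D
  | Imp a b => sderiv L (Imp a b :: G) (Some a) /\ sderiv L (b :: G) D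
  | _ => False
  end.

Lemma sderiv_left_invert L A Ys :
  propositional_compound A ->
  (forall G D, left_premisses L A G D -> sderiv L (Ys ++ G) D) ->
  forall G D, sderiv L G D -> forall H, Permutation G (A :: H) -> sderiv L (Ys ++ H) D.
Proof.
  intros HA Hprem G D Hd.
  induction Hd as
    [G p G' HP | G D G' HP | G a b D G' d IH HP | G a b _ IH1 _ IH2
    | G a b D G' d1 IH1 d2 IH2 HP | G a b _ IH | G a b _ IH | G a b _ IH
    | G a b D G' d1 IH1 d2 IH2 HP | G B a b G' HB _ d _ HP | G B a b e t G' HB _ He _ d _ HP
    | G B a b D G' HB _ d _ HP | G a b D G' Hmp d1 IH1 d2 IH2 HP | G a b Hmp _ IH1 _ IH2]
    using sderiv_ind_unified; intros H HG;
    try (destruct (Permutation_cons_cases (Permutation_trans (Permutation_sym HP) HG))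
           as [[E HGH]|(K & HGK & HHK)]; [subst A|]).
  - destruct HA.
  - eapply (s_init _ (Ys ++ K)); solve_perm.
  - destruct HA.
  - eapply (s_botL _ (Ys ++ K)); solve_perm.
  - apply Hprem; eapply sderiv_perm; [exact d|solve_perm].
  - eapply (s_andL _ (Ys ++ K) a b); [|solve_perm].
    eapply sderiv_perm; [apply (IH (a :: b :: K))|]; solve_perm.
  - apply s_andR; auto.
  - apply Hprem; split; eapply sderiv_perm; [exact d1|solve_perm|exact d2|solve_perm].
  - eapply (s_orL _ (Ys ++ K) a b); [| |solve_perm].
    + eapply sderiv_perm; [apply (IH1 (a :: K))|]; solve_perm.
    + eapply sderiv_perm; [apply (IH2 (b :: K))|]; solve_perm.
  - apply s_orR1; auto.
  - apply s_orR2; auto.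
  - apply s_impR; eapply sderiv_perm; [apply (IH (a :: H))|]; solve_perm.
  - apply Hprem; split; eapply sderiv_perm; [exact d1|solve_perm|exact d2|solve_perm].
  - eapply (s_impL _ (Ys ++ K) a b); [| |solve_perm].
    + eapply sderiv_perm; [apply (IH1 (Imp a b :: K))|]; solve_perm.
    + eapply sderiv_perm; [apply (IH2 (b :: K))|]; solve_perm.
  - destruct (Permutation_app_cons_not_in HP HG (propositional_compound_not_in_boxes _ _ HA))
      as (G0 & HG0 & HH).
    eapply (sderiv_box _ (Ys ++ G0)); try eassumption; solve_perm.
  - pose proof (propositional_compound_not_in_boxes_dia _ B a b HA) as Hn.
    destruct (Permutation_app_cons_not_in HP HG Hn) as (G0 & HG0 & HH).
    eapply (sderiv_dia _ (Ys ++ G0)); try eassumption; solve_perm.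
  - pose proof (propositional_compound_not_in_boxes_dia _ B a b HA) as Hn.
    destruct (Permutation_app_cons_not_in HP HG Hn) as (G0 & HG0 & HH).
    eapply (sderiv_boxdia _ (Ys ++ G0)); try eassumption; solve_perm.
  - destruct HA.
  - eapply (s_mp_box _ (Ys ++ K) a b); [assumption| | |solve_perm].
    + eapply sderiv_perm; [apply (IH1 (BoxArr a b :: K))|]; solve_perm.
    + eapply sderiv_perm; [apply (IH2 (BoxArr a b :: b :: K))|]; solve_perm.
  - apply s_mp_dia; auto.
Qed.

Lemma sderiv_andL_inv L a b G D : sderiv L (And a b :: G) D -> sderiv L (a :: b :: G) D.
Proof.
  intros Hd; apply (sderiv_left_invert L (And a b) [a; b] I (fun _ _ h => h) _ _ Hd).
  reflexivity.
Qed.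

Lemma sderiv_orL_inv1 L a b G D : sderiv L (Or a b :: G) D -> sderiv L (a :: G) D.
Proof.
  intros Hd; apply (sderiv_left_invert L (Or a b) [a] I (fun _ _ h => proj1 h) _ _ Hd).
  reflexivity.
Qed.

Lemma sderiv_orL_inv2 L a b G D : sderiv L (Or a b :: G) D -> sderiv L (b :: G) D.
Proof.
  intros Hd; apply (sderiv_left_invert L (Or a b) [b] I (fun _ _ h => proj2 h) _ _ Hd).
  reflexivity.
Qed.

Lemma sderiv_impL_inv L a b G D : sderiv L (Imp a b :: G) D -> sderiv L (b :: G) D.
Proof.
  intros Hd; apply (sderiv_left_invert L (Imp a b) [b] I (fun _ _ h => proj2 h) _ _ Hd).
  reflexivity.
Qed.

Definition immediate_sub (B A : form) : Prop :=
  match A with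
  | And a b | Or a b | Imp a b | BoxArr a b | DiaArr a b => B = a \/ B = b
  | _ => False
  end.

Definition contraction_admissible L A : Prop :=
  forall G D, sderiv L G D -> forall H, Permutation G (A :: A :: H) -> sderiv L (A :: H) D.

Lemma interderiv_all_incl P a B B' : interderiv_all P a B -> incl B' B -> interderiv_all P a B'.
Proof. intros HB Hi r s Hin; exact (HB r s (Hi _ Hin)). Qed.

Lemma contract_sigmas L r s B B0 X D :
  contraction_admissible L s -> Permutation B ((r, s) :: (r, s) :: B0) ->
  sderiv L (sigmas B ++ X) D -> sderiv L (sigmas ((r, s) :: B0) ++ X) D.
Proof.
  intros Hs HB Hd.
  assert (HS : Permutation (sigmas B) (sigmas ((r, s) :: (r, s) :: B0)))
    by apply (Permutation_map snd HB).
  rewrite sigmas_cons; apply (Hs _ _ Hd (sigmas B0 ++ X)); solve_perm.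
Qed.

Lemma contract_box_block L a r s B B0 X D :
  contraction_admissible L s -> Permutation B ((r, s) :: (r, s) :: B0) ->
  interderiv_all (sderiv L) a B -> sderiv L (sigmas B ++ X) D ->
  interderiv_all (sderiv L) a ((r, s) :: B0) /\ sderiv L (sigmas ((r, s) :: B0) ++ X) D.
Proof.
  intros Hs HB0 HB Hd; split; [exact (interderiv_all_incl _ _ _ _ HB (incl_cons_dup _ _ _ HB0))|].
  exact (contract_sigmas _ _ _ _ _ _ _ Hs HB0 Hd).
Qed.

Lemma contract_andL_principal L a b G H D :
  contraction_admissible L a -> contraction_admissible L b ->
  sderiv L (a :: b :: G) D -> Permutation G (And a b :: H) -> sderiv L (And a b :: H) D.
Proof.
  intros Ca Cb Hd HG; eapply (s_andL _ H a b); [|reflexivity].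
  assert (Hx : sderiv L (a :: b :: a :: b :: H) D)
    by (apply sderiv_andL_inv; eapply sderiv_perm; [exact Hd|solve_perm]).
  assert (Hy : sderiv L (a :: b :: b :: H) D) by (apply (Ca _ _ Hx (b :: b :: H)); solve_perm).
  eapply sderiv_perm; [apply (Cb _ _ Hy (a :: H))|]; solve_perm.
Qed.

Lemma contract_orL_principal L a b G H D :
  contraction_admissible L a -> contraction_admissible L b ->
  sderiv L (a :: G) D -> sderiv L (b :: G) D -> Permutation G (Or a b :: H) ->
  sderiv L (Or a b :: H) D.
Proof.
  intros Ca Cb Hda Hdb HG; eapply (s_orL _ H a b); [| |reflexivity].
  - apply (Ca (a :: a :: H) D); [|reflexivity].
    apply (sderiv_orL_inv1 L a b); eapply sderiv_perm; [exact Hda|solve_perm].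
  - apply (Cb (b :: b :: H) D); [|reflexivity].
    apply (sderiv_orL_inv2 L a b); eapply sderiv_perm; [exact Hdb|solve_perm].
Qed.

Lemma contract_impL_principal L a b G H D :
  contraction_admissible L b ->
  sderiv L (Imp a b :: H) (Some a) -> sderiv L (b :: G) D -> Permutation G (Imp a b :: H) ->
  sderiv L (Imp a b :: H) D.
Proof.
  intros Cb Ha Hdb HG; eapply (s_impL _ H a b); [exact Ha| |reflexivity].
  apply (Cb (b :: b :: H) D); [|reflexivity].
  apply (sderiv_impL_inv L a b); eapply sderiv_perm; [exact Hdb|solve_perm].
Qed.

Lemma contraction_step L A :
  (forall B, immediate_sub B A -> contraction_admissible L B) -> contraction_admissible L A.
Proof.
  intros Hsub G D Hd.
  induction Hd as
    [G p G' HP | G D G' HP | G a b D G' d IH HP | G a b _ IH1 _ IH2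
    | G a b D G' d1 IH1 d2 IH2 HP | G a b _ IH | G a b _ IH | G a b _ IH
    | G a b D G' d1 IH1 d2 IH2 HP | G B a b G' HB _ d _ HP | G B a b e t G' HB _ He _ d _ HP
    | G B a b D G' HB _ d _ HP | G a b D G' Hmp d1 IH1 d2 IH2 HP | G a b Hmp _ IH1 _ IH2]
    using sderiv_ind_unified; intros H HG;
    try (destruct (Permutation_cons_cons_cases (Permutation_trans (Permutation_sym HP) HG))
           as [[<- HGH]|(K & HGK & HHK)]).
  - eapply (s_init _ H); reflexivity.
  - eapply (s_init _ (A :: K)); solve_perm.
  - eapply (s_botL _ H); reflexivity.
  - eapply (s_botL _ (A :: K)); solve_perm.
  - apply contract_andL_principal with G; [apply Hsub; simpl; auto..|exact d|exact HGH].
  - eapply (s_andL _ (A :: K) a b); [|solve_perm].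
    eapply sderiv_perm; [apply (IH (a :: b :: K))|]; solve_perm.
  - apply s_andR; auto.
  - apply contract_orL_principal with G; [apply Hsub; simpl; auto..|exact d1|exact d2|exact HGH].
  - eapply (s_orL _ (A :: K) a b); [| |solve_perm].
    + eapply sderiv_perm; [apply (IH1 (a :: K))|]; solve_perm.
    + eapply sderiv_perm; [apply (IH2 (b :: K))|]; solve_perm.
  - apply s_orR1; auto.
  - apply s_orR2; auto.
  - apply s_impR; eapply sderiv_perm; [apply (IH (a :: H))|]; solve_perm.
  - apply contract_impL_principal with G;
      [apply Hsub; simpl; auto|apply (IH1 H); solve_perm|exact d2|exact HGH].
  - eapply (s_impL _ (A :: K) a b); [| |solve_perm].
    + eapply sderiv_perm; [apply (IH1 (Imp a b :: K))|]; solve_perm.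
    + eapply sderiv_perm; [apply (IH2 (b :: K))|]; solve_perm.
  - destruct (box_context_dup_cases HP HG) as [(G0 & HH)|(r & s & B0 & -> & HB0 & HH)].
    + eapply (sderiv_box _ G0); [exact HB|exact d|exact HH].
    + destruct (contract_box_block L a r s B B0 _ _ (Hsub s (or_intror eq_refl)) HB0 HB d)
        as [HB' d'].
      eapply (sderiv_box _ G); [exact HB'|exact d'|solve_perm].
  - destruct (dia_context_dup_cases HP HG) as [(G0 & HH)|(r & s & B0 & -> & HB0 & HH)].
    + eapply (sderiv_dia _ G0); [exact HB|exact He|exact d|exact HH].
    + destruct (contract_box_block L a r s B B0 _ _ (Hsub s (or_intror eq_refl)) HB0 HB d)
        as [HB' d'].
      eapply (sderiv_dia _ G); [exact HB'|exact He|exact d'|solve_perm].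
  - destruct (dia_context_dup_cases HP HG) as [(G0 & HH)|(r & s & B0 & -> & HB0 & HH)].
    + eapply (sderiv_boxdia _ G0); [exact HB|exact d|exact HH].
    + destruct (contract_box_block L a r s B B0 _ _ (Hsub s (or_intror eq_refl)) HB0 HB d)
        as [HB' d'].
      eapply (sderiv_boxdia _ G); [exact HB'|exact d'|solve_perm].
  - eapply (s_mp_box _ H a b); [exact Hmp|apply (IH1 H); solve_perm| |reflexivity].
    eapply sderiv_perm; [apply (IH2 (b :: H))|]; solve_perm.
  - eapply (s_mp_box _ (A :: K) a b); [exact Hmp| | |solve_perm].
    + eapply sderiv_perm; [apply (IH1 (BoxArr a b :: K))|]; solve_perm.
    + eapply sderiv_perm; [apply (IH2 (BoxArr a b :: b :: K))|]; solve_perm.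
  - apply s_mp_dia; auto.
Qed.

Lemma sderiv_contract L A : contraction_admissible L A.
Proof.
  induction A; apply contraction_step; simpl; intros B HB; try contradiction;
    destruct HB; subst; assumption.
Qed.

Lemma sderiv_incl L G D G' : sderiv L G D -> incl G G' -> sderiv L G' D.
Proof.
  intros Hd Hi.
  enough (Hm : forall K, incl K G' -> sderiv L (G' ++ K) D -> sderiv L G' D)
    by exact (Hm G Hi (sderiv_weaken_app _ _ _ G' Hd)).
  induction K as [|x K IH]; intros HK Hx; [rewrite app_nil_r in Hx; exact Hx|].
  apply IH; [intros y Hy; apply HK; right; exact Hy|].
  destruct (in_split _ _ (HK x (in_eq _ _))) as (l1 & l2 & ->).
  eapply sderiv_perm; [apply (sderiv_contract L x _ _ Hx ((l1 ++ l2) ++ K))|]; solve_perm.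
Qed.

Lemma sderiv_in L a G : In a G -> sderiv L G (Some a).
Proof. intros H; apply (sderiv_incl _ _ _ _ (sderiv_refl L a [])); intros x [<-|[]]; exact H. Qed.

Lemma botL_in L G D : In Bot G -> sderiv L G D.
Proof. intros (l1 & l2 & ->)%in_split; eapply (s_botL _ (l1 ++ l2)); solve_perm. Qed.

Lemma andL_in L a b G D : In (And a b) G -> sderiv L (a :: b :: G) D -> sderiv L G D.
Proof.
  intros (l1 & l2 & ->)%in_split Hd; eapply (s_andL _ (l1 ++ l2) a b); [|solve_perm].
  eapply sderiv_incl; [apply (sderiv_andL_inv L a b (a :: b :: l1 ++ l2))|solve_incl].
  eapply sderiv_perm; [exact Hd|solve_perm].
Qed.

Lemma orL_in L a b G D :
  In (Or a b) G -> sderiv L (a :: G) D -> sderiv L (b :: G) D -> sderiv L G D.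
Proof.
  intros (l1 & l2 & ->)%in_split Hd1 Hd2; eapply (s_orL _ (l1 ++ l2) a b); [| |solve_perm].
  - eapply sderiv_incl; [apply (sderiv_orL_inv1 L a b (a :: l1 ++ l2))|solve_incl].
    eapply sderiv_perm; [exact Hd1|solve_perm].
  - eapply sderiv_incl; [apply (sderiv_orL_inv2 L a b (b :: l1 ++ l2))|solve_incl].
    eapply sderiv_perm; [exact Hd2|solve_perm].
Qed.

Lemma impL_in L a b G D :
  In (Imp a b) G -> sderiv L G (Some a) -> sderiv L (b :: G) D -> sderiv L G D.
Proof.
  intros (l1 & l2 & ->)%in_split Hd1 Hd2; eapply (s_impL _ (l1 ++ l2) a b); [| |solve_perm].
  - eapply sderiv_perm; [exact Hd1|solve_perm].
  - eapply sderiv_incl; [apply (sderiv_impL_inv L a b (b :: l1 ++ l2))|solve_incl].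
    eapply sderiv_perm; [exact Hd2|solve_perm].
Qed.

Lemma mpbox_in L a b G D :
  has_mp L = true -> In (BoxArr a b) G ->
  sderiv L G (Some a) -> sderiv L (b :: G) D -> sderiv L G D.
Proof.
  intros Hmp (l1 & l2 & ->)%in_split Hd1 Hd2.
  eapply (s_mp_box _ (l1 ++ l2) a b); [exact Hmp| | |solve_perm].
  - eapply sderiv_perm; [exact Hd1|solve_perm].
  - eapply sderiv_perm; [exact Hd2|solve_perm].
Qed.

Lemma box_in L B a b G :
  incl (boxes B) G -> interderiv_all (sderiv L) a B ->
  sderiv L (sigmas B ++ id_hyp L a) (Some b) -> sderiv L G (Some (BoxArr a b)).
Proof.
  intros HBG HB Hd; apply (sderiv_incl L (G ++ boxes B)); [|solve_incl].
  eapply sderiv_box; [exact HB|exact Hd|reflexivity].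
Qed.

Lemma dia_in L B a b e t G :
  In (DiaArr a b) G -> incl (boxes B) G -> interderiv_all (sderiv L) a B ->
  interderiv (sderiv L) a e -> sderiv L (sigmas B ++ id_hyp L a ++ [b]) (Some t) ->
  sderiv L G (Some (DiaArr e t)).
Proof.
  intros Hab HBG HB He Hd; apply (sderiv_incl L (G ++ boxes B ++ [DiaArr a b])); [|solve_incl].
  eapply sderiv_dia; [exact HB|exact He|exact Hd|reflexivity].
Qed.

Lemma boxdia_in L B a b D G :
  In (DiaArr a b) G -> incl (boxes B) G -> interderiv_all (sderiv L) a B ->
  sderiv L (sigmas B ++ id_hyp L a ++ [b]) None -> sderiv L G D.
Proof.
  intros Hab HBG HB Hd; apply (sderiv_incl L (G ++ boxes B ++ [DiaArr a b])); [|solve_incl].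
  eapply sderiv_boxdia; [exact HB|exact Hd|reflexivity].
Qed.

Lemma mpbox_all_in L B G D :
  has_mp L = true -> incl (boxes B) G -> (forall r s, In (r, s) B -> sderiv L G (Some r)) ->
  sderiv L (sigmas B ++ G) D -> sderiv L G D.
Proof.
  intros Hmp; revert G D; induction B as [|[r s] B IH]; intros G D HBG Hr Hd; [exact Hd|].
  rewrite boxes_cons in HBG; rewrite sigmas_cons in Hd.
  apply (mpbox_in L r s); [exact Hmp|apply HBG, in_eq|apply (Hr r s), in_eq|].
  apply IH.
  - intros x Hx; right; apply HBG; right; exact Hx.
  - intros r' s' Hin; apply sderiv_weaken, (Hr r' s'); right; exact Hin.
  - eapply sderiv_perm; [exact Hd|solve_perm].
Qed.

(** * Cut admissibility *)

Definition cut_admissible L A : Prop :=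
  forall Gl G Gr D, sderiv L Gl (Some A) -> sderiv L Gr D ->
  incl Gl G -> incl Gr (A :: G) -> sderiv L G D.

Lemma cut_shared L A G Gr D :
  cut_admissible L A -> sderiv L G (Some A) -> sderiv L Gr D -> incl Gr (A :: G) -> sderiv L G D.
Proof. intros HC H1 H2; exact (HC G G Gr D H1 H2 (incl_refl G)). Qed.

Lemma interderiv_refl L a : interderiv (sderiv L) a a.
Proof. split; apply sderiv_refl. Qed.

Lemma interderiv_sym P a r : interderiv P a r -> interderiv P r a.
Proof. intros [H1 H2]; split; assumption. Qed.

Lemma interderiv_trans L x c e :
  cut_admissible L c -> interderiv (sderiv L) x c -> interderiv (sderiv L) c e ->
  interderiv (sderiv L) x e.
Proof.
  intros Hc [Hxc Hcx] [Hce Hec]; split.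
  - apply (cut_shared L c [x] [c]); [exact Hc|exact Hxc|exact Hce|solve_incl].
  - apply (cut_shared L c [e] [c]); [exact Hc|exact Hec|exact Hcx|solve_incl].
Qed.

Lemma id_hyp_replace L a e X Y D :
  cut_admissible L a -> sderiv L [e] (Some a) ->
  sderiv L (X ++ id_hyp L a ++ Y) D -> sderiv L (X ++ id_hyp L e ++ Y) D.
Proof.
  intros Ha He Hd; unfold id_hyp in *; destruct (has_id L); [|exact Hd].
  apply (cut_shared L a _ (X ++ [a] ++ Y) D Ha); [|exact Hd|solve_incl].
  eapply sderiv_incl; [exact He|solve_incl].
Qed.

Lemma id_hyp_discharge L a G X D :
  cut_admissible L a -> sderiv L G (Some a) -> sderiv L (X ++ id_hyp L a) D -> incl X G ->
  sderiv L G D.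
Proof.
  intros Ha HG Hd Hi; unfold id_hyp in *; destruct (has_id L).
  - apply (cut_shared L a G _ D Ha HG Hd); solve_incl.
  - eapply sderiv_incl; [exact Hd|solve_incl].
Qed.

(* The principal cut on [φ □→ ψ] replaces the pair [(φ, ψ)] of [B2] by the block [B1]. *)
Lemma merge_box_blocks L a b B1 c B2 Z W :
  cut_admissible L a -> cut_admissible L b ->
  interderiv_all (sderiv L) a B1 -> sderiv L (sigmas B1 ++ id_hyp L a) (Some b) ->
  interderiv_all (sderiv L) c B2 -> In (a, b) B2 -> sderiv L (sigmas B2 ++ id_hyp L c ++ Z) W ->
  let B := B1 ++ remove pair_eq_dec (a, b) B2 in
  interderiv_all (sderiv L) c B /\ sderiv L (sigmas B ++ id_hyp L c ++ Z) W.
Proof.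
  intros Ca Cb HB1 Hb HB2 Hab Hd B; split.
  - intros r s [Hin|(Hin & _)%in_remove]%in_app_or.
    + apply (interderiv_trans L c a r Ca); [|exact (HB1 r s Hin)].
      destruct (HB2 a b Hab) as [Hca Hac]; split; assumption.
    + exact (HB2 r s Hin).
  - pose proof (sigmas_remove_incl a b B2).
    assert (Hb' : sderiv L (sigmas B1 ++ id_hyp L c ++ []) (Some b)).
    { apply (id_hyp_replace L a); [exact Ca|apply (HB2 a b Hab)|rewrite app_nil_r; exact Hb]. }
    unfold B; rewrite sigmas_app.
    apply (cut_shared L b _ (sigmas B2 ++ id_hyp L c ++ Z) W Cb);
      [eapply sderiv_incl; [exact Hb'|solve_incl]|exact Hd|solve_incl].
Qed.

(* The last rule, with its premisses, of a derivation of [G ⇒ A] in which [A] is principal. *)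
Inductive right_intro L G : form -> Prop :=
| ri_and a b : sderiv L G (Some a) -> sderiv L G (Some b) -> right_intro L G (And a b)
| ri_or1 a b : sderiv L G (Some a) -> right_intro L G (Or a b)
| ri_or2 a b : sderiv L G (Some b) -> right_intro L G (Or a b)
| ri_imp a b : sderiv L (a :: G) (Some b) -> right_intro L G (Imp a b)
| ri_box B a b : incl (boxes B) G -> interderiv_all (sderiv L) a B ->
    sderiv L (sigmas B ++ id_hyp L a) (Some b) -> right_intro L G (BoxArr a b)
| ri_dia B x y c d : In (DiaArr x y) G -> incl (boxes B) G -> interderiv_all (sderiv L) x B ->
    interderiv (sderiv L) x c -> sderiv L (sigmas B ++ id_hyp L x ++ [y]) (Some d) ->
    right_intro L G (DiaArr c d)
| ri_mpdia c d : has_mp L = true -> sderiv L G (Some c) -> sderiv L G (Some d) ->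
    right_intro L G (DiaArr c d).

Lemma right_intro_incl L G G' A : right_intro L G A -> incl G G' -> right_intro L G' A.
Proof.
  intros HR Hi; destruct HR.
  - apply ri_and; eapply sderiv_incl; eassumption.
  - apply ri_or1; eapply sderiv_incl; eassumption.
  - apply ri_or2; eapply sderiv_incl; eassumption.
  - apply ri_imp; eapply sderiv_incl; [eassumption|solve_incl].
  - eapply ri_box; [eapply incl_tran|..]; eassumption.
  - eapply ri_dia; [apply Hi|eapply incl_tran|..]; eassumption.
  - apply ri_mpdia; [|eapply sderiv_incl..]; eassumption.
Qed.

(* What a cut leaves of the premisses of a [◇] or [□◇] rule with antecedent [c]: either such
   premisses for some [χ ⇔ c], or, with mp, enough to apply mp◇ or discharge the succedent. *)
Definition dia_premisses L G c W : Prop :=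
  (exists x y B, In (DiaArr x y) G /\ incl (boxes B) G /\ interderiv_all (sderiv L) x B /\
     (forall e, interderiv (sderiv L) c e -> interderiv (sderiv L) x e) /\
     sderiv L (sigmas B ++ id_hyp L x ++ [y]) W) \/
  (has_mp L = true /\ (forall e, sderiv L [c] (Some e) -> sderiv L G (Some e)) /\ sderiv L G W).

Lemma dia_premisses_dia L G c e t :
  dia_premisses L G c (Some t) -> interderiv (sderiv L) c e -> sderiv L G (Some (DiaArr e t)).
Proof.
  intros [(x & y & B & Hxy & HBG & HB & Hx & Hd)|(Hmp & Hc & Ht)] Hce.
  - exact (dia_in L B x y e t G Hxy HBG HB (Hx e Hce) Hd).
  - apply s_mp_dia; [exact Hmp|apply Hc, Hce|exact Ht].
Qed.

Lemma dia_premisses_boxdia L G c D : dia_premisses L G c None -> sderiv L G D.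
Proof.
  intros [(x & y & B & Hxy & HBG & HB & _ & Hd)|(_ & _ & Hd)].
  - exact (boxdia_in L B x y D G Hxy HBG HB Hd).
  - exact (sderiv_empty_succ L G D Hd).
Qed.

Lemma cut_dia_principal L c d G B2 W :
  cut_admissible L c -> cut_admissible L d -> right_intro L G (DiaArr c d) ->
  incl (boxes B2) G -> interderiv_all (sderiv L) c B2 ->
  sderiv L (sigmas B2 ++ id_hyp L c ++ [d]) W -> dia_premisses L G c W.
Proof.
  intros Cc Cd HR HB2G HB2 Hd.
  inversion HR as [| | | |
    |B1 x y c' d' Hxy HB1G HB1 Hxc Hy
    |c' d' Hmp Hc Hdd]; subst.
  - left; exists x, y, (B1 ++ B2); split; [|split; [|split; [|split]]].
    + exact Hxy.
    + rewrite boxes_app; apply incl_app; assumption.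
    + intros r s [Hin|Hin]%in_app_or;
        [exact (HB1 r s Hin)|exact (interderiv_trans L x c r Cc Hxc (HB2 r s Hin))].
    + intros e Hce; exact (interderiv_trans L x c e Cc Hxc Hce).
    + rewrite sigmas_app.
      assert (Hd' : sderiv L (sigmas B2 ++ id_hyp L x ++ [d]) W)
        by (apply (id_hyp_replace L c); [exact Cc|apply Hxc|exact Hd]).
      apply (cut_shared L d _ (sigmas B2 ++ id_hyp L x ++ [d]) W Cd); [|exact Hd'|solve_incl].
      eapply sderiv_incl; [exact Hy|solve_incl].
  - right; split; [exact Hmp|split].
    + intros e He; apply (cut_shared L c G [c] _ Cc Hc He); solve_incl.
    + apply (mpbox_all_in L B2 G W Hmp HB2G).
      * intros r s Hin; apply (cut_shared L c G [c] _ Cc Hc); [apply (HB2 r s Hin)|solve_incl].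
      * assert (Hd' : sderiv L (d :: sigmas B2 ++ G) W).
        { apply (id_hyp_discharge L c _ (sigmas B2 ++ [d]) W Cc); [| |solve_incl].
          - eapply sderiv_incl; [exact Hc|solve_incl].
          - eapply sderiv_incl; [exact Hd|solve_incl]. }
        apply (cut_shared L d _ _ W Cd (sderiv_weaken_app L G _ (sigmas B2) Hdd) Hd'); solve_incl.
Qed.

Lemma cut_and_principal L a b G D :
  cut_admissible L a -> cut_admissible L b -> right_intro L G (And a b) ->
  sderiv L (a :: b :: G) D -> sderiv L G D.
Proof.
  intros Ca Cb HR Hd; inversion HR as [a' b' Ha Hb| | | | | |]; subst.
  apply (cut_shared L b G (b :: G) D Cb Hb); [|solve_incl].
  apply (cut_shared L a (b :: G) (a :: b :: G) D Ca); [|exact Hd|solve_incl].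
  eapply sderiv_incl; [exact Ha|solve_incl].
Qed.

Lemma cut_or_principal L a b G D :
  cut_admissible L a -> cut_admissible L b -> right_intro L G (Or a b) ->
  sderiv L (a :: G) D -> sderiv L (b :: G) D -> sderiv L G D.
Proof.
  intros Ca Cb HR Hda Hdb; inversion HR as [|a' b' Ha|a' b' Hb| | | |]; subst.
  - exact (cut_shared L a G (a :: G) D Ca Ha Hda (incl_refl _)).
  - exact (cut_shared L b G (b :: G) D Cb Hb Hdb (incl_refl _)).
Qed.

Lemma cut_imp_principal L a b G D :
  cut_admissible L a -> cut_admissible L b -> right_intro L G (Imp a b) ->
  sderiv L G (Some a) -> sderiv L (b :: G) D -> sderiv L G D.
Proof.
  intros Ca Cb HR Ha Hd; inversion HR as [| | |a' b' Hab| | |]; subst.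
  apply (cut_shared L b G (b :: G) D Cb); [|exact Hd|solve_incl].
  exact (cut_shared L a G (a :: G) _ Ca Ha Hab (incl_refl _)).
Qed.

Lemma cut_mpbox_principal L a b G D :
  has_mp L = true -> cut_admissible L a -> cut_admissible L b -> right_intro L G (BoxArr a b) ->
  sderiv L G (Some a) -> sderiv L (b :: G) D -> sderiv L G D.
Proof.
  intros Hmp Ca Cb HR Ha Hb.
  inversion HR as [| | | |B1 a' b' HB1G HB1 Hab| |]; subst.
  apply (cut_shared L b G (b :: G) D Cb); [|exact Hb|solve_incl].
  apply (mpbox_all_in L B1 G _ Hmp HB1G).
  - intros r s Hin; apply (cut_shared L a G [a] _ Ca Ha); [apply (HB1 r s Hin)|solve_incl].
  - apply (id_hyp_discharge L a _ (sigmas B1) _ Ca); [|exact Hab|solve_incl].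
    eapply sderiv_incl; [exact Ha|solve_incl].
Qed.

Section CutRight.

Variables (L : logic) (A : form).
Hypothesis cut_sub : forall B, immediate_sub B A -> cut_admissible L B.

Lemma cut_right_box G Gr B2 e f :
  right_intro L G A -> incl Gr (A :: G) -> incl (boxes B2) Gr ->
  interderiv_all (sderiv L) e B2 -> sderiv L (sigmas B2 ++ id_hyp L e) (Some f) ->
  sderiv L G (Some (BoxArr e f)).
Proof.
  intros HR Hi HB2 HE Hd.
  destruct (in_dec form_eq_dec A (boxes B2)) as [(a & b & -> & Hab)%in_boxes|Hn].
  - inversion HR as [| | | |B1 a' b' HB1G HB1 Hb| |]; subst.
    rewrite <- (app_nil_r (id_hyp L e)) in Hd.
    destruct (merge_box_blocks L a b B1 e B2 [] (Some f) (cut_sub a (or_introl eq_refl))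
                (cut_sub b (or_intror eq_refl)) HB1 Hb HE Hab Hd) as [HE' Hd'].
    rewrite app_nil_r in Hd'.
    apply (box_in L (B1 ++ remove pair_eq_dec (a, b) B2)); [|exact HE'|exact Hd'].
    rewrite boxes_app; apply incl_app; [exact HB1G|].
    apply boxes_remove_incl; eapply incl_tran; eassumption.
  - apply (box_in L B2); [|exact HE|exact Hd].
    apply (boxes_incl_not_in A); [exact Hn|eapply incl_tran; eassumption].
Qed.

Lemma cut_right_dia G Gr B2 c d W :
  right_intro L G A -> incl Gr (A :: G) -> In (DiaArr c d) Gr -> incl (boxes B2) Gr ->
  interderiv_all (sderiv L) c B2 -> sderiv L (sigmas B2 ++ id_hyp L c ++ [d]) W ->
  dia_premisses L G c W.
Proof.
  intros HR Hi Hcd HB2 HE Hd.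
  destruct (Hi _ Hcd) as [->|HcdG].
  - apply (cut_dia_principal L c d G B2 W);
      [apply cut_sub; simpl; auto..|exact HR| |exact HE|exact Hd].
    apply (boxes_incl_not_in (DiaArr c d)); [apply dia_not_in_boxes|eapply incl_tran; eassumption].
  - left; destruct (in_dec form_eq_dec A (boxes B2)) as [(a & b & -> & Hab)%in_boxes|Hn].
    + inversion HR as [| | | |B1 a' b' HB1G HB1 Hb| |]; subst.
      destruct (merge_box_blocks L a b B1 c B2 [d] W (cut_sub a (or_introl eq_refl))
                  (cut_sub b (or_intror eq_refl)) HB1 Hb HE Hab Hd) as [HE' Hd'].
      exists c, d, (B1 ++ remove pair_eq_dec (a, b) B2); split; [exact HcdG|split; [|split; auto]].
      rewrite boxes_app; apply incl_app; [exact HB1G|].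
      apply boxes_remove_incl; eapply incl_tran; eassumption.
    + exists c, d, B2; split; [exact HcdG|split; [|split; auto]].
      apply (boxes_incl_not_in A); [exact Hn|eapply incl_tran; eassumption].
Qed.

Ltac apply_ih IH HR :=
  apply IH; [eapply right_intro_incl; [exact HR|solve_incl]|solve_incl].

Lemma cut_right Gr D :
  sderiv L Gr D -> forall G, right_intro L G A -> incl Gr (A :: G) -> sderiv L G D.
Proof.
  intros Hd; induction Hd as
    [G p G' HP | G D G' HP | G a b D G' d IH HP | G a b _ IH1 _ IH2
    | G a b D G' d1 IH1 d2 IH2 HP | G a b _ IH | G a b _ IH | G a b _ IH
    | G a b D G' d1 IH1 d2 IH2 HP | G B a b G' HB _ d _ HP | G B a b e t G' HB _ He _ d _ HP
    | G B a b D G' HB _ d _ HP | G a b D G' Hmp d1 IH1 d2 IH2 HP | G a b Hmp _ IH1 _ IH2]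
    using sderiv_ind_unified; intros C HR Hi;
    try (destruct (Permutation_incl_cons HP Hi) as [[E|Hin] HGi]; [subst A|]);
    try pose proof (Permutation_incl _ _ HP).
  - inversion HR.
  - apply sderiv_in; exact Hin.
  - inversion HR.
  - apply botL_in; exact Hin.
  - apply (cut_and_principal L a b C D); [apply cut_sub; simpl; auto..|exact HR|apply_ih IH HR].
  - apply (andL_in L a b C D Hin); apply_ih IH HR.
  - apply s_andR; [apply IH1|apply IH2]; assumption.
  - apply (cut_or_principal L a b C D);
      [apply cut_sub; simpl; auto..|exact HR|apply_ih IH1 HR|apply_ih IH2 HR].
  - apply (orL_in L a b C D Hin); [apply_ih IH1 HR|apply_ih IH2 HR].
  - apply s_orR1, IH; assumption.
  - apply s_orR2, IH; assumption.
  - apply s_impR; apply_ih IH HR.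
  - apply (cut_imp_principal L a b C D);
      [apply cut_sub; simpl; auto..|exact HR|apply_ih IH1 HR|apply_ih IH2 HR].
  - apply (impL_in L a b C D Hin); [apply_ih IH1 HR|apply_ih IH2 HR].
  - apply (cut_right_box C G' B a b HR Hi); [solve_incl|exact HB|exact d].
  - apply (dia_premisses_dia L C a e t); [|exact He].
    apply (cut_right_dia C G' B a b _ HR Hi); [solve_in|solve_incl|exact HB|exact d].
  - apply (dia_premisses_boxdia L C a D).
    apply (cut_right_dia C G' B a b _ HR Hi); [solve_in|solve_incl|exact HB|exact d].
  - apply (cut_mpbox_principal L a b C D Hmp);
      [apply cut_sub; simpl; auto..|exact HR|apply_ih IH1 HR|apply_ih IH2 HR].
  - apply (mpbox_in L a b C D Hmp Hin); [apply_ih IH1 HR|apply_ih IH2 HR].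
  - apply s_mp_dia; [exact Hmp|apply IH1|apply IH2]; assumption.
Qed.

End CutRight.

Lemma cut_step L A :
  (forall B, immediate_sub B A -> cut_admissible L B) -> cut_admissible L A.
Proof.
  intros Hsub Gl G Gr D HL; remember (Some A) as SA eqn:E; revert G Gr D E.
  induction HL as
    [G p G' HP | G D G' HP | G a b D G' d IH HP | G a b d1 _ d2 _
    | G a b D G' d1 IH1 d2 IH2 HP | G a b d _ | G a b d _ | G a b d _
    | G a b D G' d1 IH1 d2 IH2 HP | G B a b G' HB _ d _ HP | G B a b e t G' HB _ He _ d _ HP
    | G B a b D G' HB _ d _ HP | G a b D G' Hmp d1 IH1 d2 IH2 HP | G a b Hmp d1 _ d2 _]
    using sderiv_ind_unified; intros C Gr DR E HR HlC HrC;
    try pose proof (Permutation_incl _ _ HP).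
  - injection E as <-; eapply sderiv_incl; [exact HR|solve_incl].
  - apply botL_in; solve_in.
  - apply (andL_in L a b); [solve_in|].
    apply (IH (a :: b :: C) Gr DR E HR); solve_incl.
  - injection E as <-; apply (cut_right L _ Hsub Gr DR HR C); [|exact HrC].
    apply ri_and; eapply sderiv_incl; eassumption.
  - apply (orL_in L a b); [solve_in| |].
    + apply (IH1 (a :: C) Gr DR E HR); solve_incl.
    + apply (IH2 (b :: C) Gr DR E HR); solve_incl.
  - injection E as <-; apply (cut_right L _ Hsub Gr DR HR C); [|exact HrC].
    apply ri_or1; eapply sderiv_incl; eassumption.
  - injection E as <-; apply (cut_right L _ Hsub Gr DR HR C); [|exact HrC].
    apply ri_or2; eapply sderiv_incl; eassumption.
  - injection E as <-; apply (cut_right L _ Hsub Gr DR HR C); [|exact HrC].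
    apply ri_imp; eapply sderiv_incl; [eassumption|solve_incl].
  - apply (impL_in L a b); [solve_in|eapply sderiv_incl; [exact d1|solve_incl]|].
    apply (IH2 (b :: C) Gr DR E HR); solve_incl.
  - injection E as <-; apply (cut_right L _ Hsub Gr DR HR C); [|exact HrC].
    apply (ri_box _ _ B); [solve_incl|exact HB|exact d].
  - injection E as <-; apply (cut_right L _ Hsub Gr DR HR C); [|exact HrC].
    apply (ri_dia _ _ B a b); [solve_in|solve_incl|exact HB|exact He|exact d].
  - apply (boxdia_in L B a b DR C); [solve_in|solve_incl|exact HB|exact d].
  - apply (mpbox_in L a b C DR Hmp); [solve_in|eapply sderiv_incl; [exact d1|solve_incl]|].
    apply (IH2 (b :: C) Gr DR E HR); solve_incl.
  - injection E as <-; apply (cut_right L _ Hsub Gr DR HR C); [|exact HrC].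
    apply ri_mpdia; [exact Hmp|eapply sderiv_incl; eassumption..].
Qed.

Lemma sderiv_cut_admissible L A : cut_admissible L A.
Proof.
  induction A; apply cut_step; simpl; intros B HB; try contradiction;
    destruct HB; subst; assumption.
Qed.

Lemma sderiv_cut L A G Gr D :
  sderiv L G (Some A) -> sderiv L Gr D -> incl Gr (A :: G) -> sderiv L G D.
Proof. apply cut_shared, sderiv_cut_admissible. Qed.

(** * Soundness *)

Inductive hderiv_from L (Gm : list form) : form -> Prop :=
| hf_thm f : hderiv L f -> hderiv_from L Gm f
| hf_hyp f : In f Gm -> hderiv_from L Gm f
| hf_mp a b : hderiv_from L Gm (Imp a b) -> hderiv_from L Gm a -> hderiv_from L Gm b.

Lemma hderiv_imp_refl L a : hderiv L (Imp a a).
Proof.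
  eapply h_MP; [eapply h_MP; [apply (h_A2 L a (Imp a a) a)|apply h_A1]|apply (h_A1 L a a)].
Qed.

Lemma hderiv_from_deduction L a Gm b : hderiv_from L (a :: Gm) b -> hderiv_from L Gm (Imp a b).
Proof.
  induction 1 as [f Hf|f [<-|Hf]|a' b' _ IH1 _ IH2].
  - eapply hf_mp; [apply hf_thm, h_A1|apply hf_thm, Hf].
  - apply hf_thm, hderiv_imp_refl.
  - eapply hf_mp; [apply hf_thm, h_A1|apply hf_hyp, Hf].
  - eapply hf_mp; [eapply hf_mp; [apply hf_thm, h_A2|exact IH1]|exact IH2].
Qed.

Lemma hderiv_from_nil L f : hderiv_from L [] f -> hderiv L f.
Proof. induction 1 as [f Hf|f []|a b _ IH1 _ IH2]; [exact Hf|exact (h_MP L a b IH1 IH2)]. Qed.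

Lemma hderiv_from_subst L Gm f Dl :
  hderiv_from L Gm f -> (forall x, In x Gm -> hderiv_from L Dl x) -> hderiv_from L Dl f.
Proof. induction 1; intros HD; [apply hf_thm|apply HD|eapply hf_mp]; eauto. Qed.

Lemma hderiv_from_incl L Gm f Dl : hderiv_from L Gm f -> incl Gm Dl -> hderiv_from L Dl f.
Proof. intros H Hi; apply (hderiv_from_subst _ _ _ _ H); intros x Hx; apply hf_hyp, Hi, Hx. Qed.

Lemma hf_mp_thm L Gm a b : hderiv L (Imp a b) -> hderiv_from L Gm a -> hderiv_from L Gm b.
Proof. intros H1 H2; exact (hf_mp _ _ _ _ (hf_thm _ _ _ H1) H2). Qed.

Lemma hf_and L Gm a b : hderiv_from L Gm a -> hderiv_from L Gm b -> hderiv_from L Gm (And a b).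
Proof. intros Ha Hb; apply (hf_mp _ _ _ _ (hf_mp_thm _ _ _ _ (h_A5 L a b) Ha) Hb). Qed.

Lemma hf_and1 L Gm a b : hderiv_from L Gm (And a b) -> hderiv_from L Gm a.
Proof. apply hf_mp_thm, h_A3. Qed.

Lemma hf_and2 L Gm a b : hderiv_from L Gm (And a b) -> hderiv_from L Gm b.
Proof. apply hf_mp_thm, h_A4. Qed.

Lemma hf_or_elim L Gm a b c :
  hderiv_from L Gm (Or a b) -> hderiv_from L (a :: Gm) c -> hderiv_from L (b :: Gm) c ->
  hderiv_from L Gm c.
Proof.
  intros Hab Ha%hderiv_from_deduction Hb%hderiv_from_deduction.
  exact (hf_mp _ _ _ _ (hf_mp _ _ _ _ (hf_mp_thm _ _ _ _ (h_A8 L a b c) Ha) Hb) Hab).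
Qed.

Lemma hderiv_iff_intro L a r : hderiv_from L [a] r -> hderiv_from L [r] a -> hderiv L (Iff a r).
Proof. intros H1 H2; apply hderiv_from_nil, hf_and; apply hderiv_from_deduction; assumption. Qed.

Lemma hf_iff_mp L Gm a r : hderiv L (Iff a r) -> hderiv_from L Gm a -> hderiv_from L Gm r.
Proof. intros H; apply hf_mp, (hf_and1 _ _ _ (Imp r a)), hf_thm, H. Qed.

Lemma hf_iff_mpr L Gm a r : hderiv L (Iff a r) -> hderiv_from L Gm r -> hderiv_from L Gm a.
Proof. intros H; apply hf_mp, (hf_and2 _ _ (Imp a r)), hf_thm, H. Qed.

Definition hderiv_seq L G D : Prop := hderiv_from L G (big_or D).

Lemma hderiv_iff_interderiv L a r :
  interderiv (hderiv_seq L) a r -> hderiv L (Iff a r).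
Proof. intros [H1 H2]; exact (hderiv_iff_intro L a r H1 H2). Qed.

Lemma hderiv_box_mono L a x y :
  hderiv L (Imp x y) -> hderiv L (Imp (BoxArr a x) (BoxArr a y)).
Proof.
  intros H.
  assert (Hxy : hderiv L (Iff x (And x y))).
  { apply hderiv_iff_intro.
    - apply hf_and; [|apply (hf_mp_thm _ _ _ _ H)]; apply hf_hyp, in_eq.
    - apply (hf_and1 _ _ _ y), hf_hyp, in_eq. }
  apply hderiv_from_nil, hderiv_from_deduction, (hf_and2 _ _ (BoxArr a x)).
  apply (hf_mp_thm _ _ _ _ (h_CMbox L a x y)).
  apply (hf_iff_mp _ _ _ _ (h_RCbox L a _ _ Hxy)), hf_hyp, in_eq.
Qed.

Fixpoint conj_list (l : list form) : form :=
  match l with [] => Top | x :: l' => And x (conj_list l') end.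

Lemma hf_box_conj_list L Gm a l :
  (forall x, In x l -> hderiv_from L Gm (BoxArr a x)) -> hderiv_from L Gm (BoxArr a (conj_list l)).
Proof.
  induction l as [|x l IH]; intros H; simpl.
  - apply hf_thm, h_CNbox.
  - apply (hf_mp_thm _ _ _ _ (h_CCbox L a x (conj_list l))), hf_and.
    + apply H, in_eq.
    + apply IH; intros y Hy; apply H, in_cons, Hy.
Qed.

Lemma hf_conj_list_elim L Gm l x : hderiv_from L Gm (conj_list l) -> In x l -> hderiv_from L Gm x.
Proof.
  induction l as [|y l IH]; intros H Hx; [destruct Hx|]; simpl in H.
  destruct Hx as [<-|Hx].
  - exact (hf_and1 _ _ _ _ H).
  - exact (IH (hf_and2 _ _ _ _ H) Hx).
Qed.

Lemma hderiv_conj_list_imp L l b : hderiv_from L l b -> hderiv L (Imp (conj_list l) b).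
Proof.
  intros H; apply hderiv_from_nil, hderiv_from_deduction, (hderiv_from_subst _ _ _ _ H).
  intros x Hx; exact (hf_conj_list_elim _ _ _ _ (hf_hyp _ _ _ (in_eq _ _)) Hx).
Qed.

Lemma hf_box_block L G B a b :
  interderiv_all (hderiv_seq L) a B -> incl (boxes B) G ->
  hderiv_from L (sigmas B ++ id_hyp L a) b -> hderiv_from L G (BoxArr a b).
Proof.
  intros HB HBG Hb.
  apply (hf_mp_thm _ _ _ _ (hderiv_box_mono _ _ _ _ (hderiv_conj_list_imp _ _ _ Hb))).
  apply hf_box_conj_list; intros x [(r & Hin)%in_sigmas|Hx]%in_app_or.
  - apply (hf_iff_mpr _ _ _ _ (h_RAbox L a r x (hderiv_iff_interderiv _ _ _ (HB r x Hin)))).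
    apply hf_hyp, HBG, in_boxes; eauto.
  - unfold id_hyp in Hx; destruct (has_id L) eqn:E; [|destruct Hx].
    destruct Hx as [<-|[]]; apply hf_thm, h_IDbox, E.
Qed.

Lemma hf_dia_block L G B a b e t :
  In (DiaArr a b) G -> interderiv_all (hderiv_seq L) a B -> incl (boxes B) G ->
  hderiv L (Iff a e) -> hderiv_from L (sigmas B ++ id_hyp L a ++ [b]) t ->
  hderiv_from L G (DiaArr e t).
Proof.
  intros Hab HB HBG He Ht.
  assert (Hbt : hderiv_from L G (BoxArr a (Imp b t))).
  { apply (hf_box_block _ _ B); [exact HB|exact HBG|].
    apply hderiv_from_deduction; eapply hderiv_from_incl; [exact Ht|solve_incl]. }
  apply (hf_iff_mp _ _ _ _ (h_RAdia L a e t He)).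
  exact (hf_mp _ _ _ _ (hf_mp_thm _ _ _ _ (h_CKdia L a b t) Hbt) (hf_hyp _ _ _ Hab)).
Qed.

Lemma hf_boxdia_block L G B a b c :
  In (DiaArr a b) G -> interderiv_all (hderiv_seq L) a B -> incl (boxes B) G ->
  hderiv_from L (sigmas B ++ id_hyp L a ++ [b]) Bot -> hderiv_from L G c.
Proof.
  intros Hab HB HBG Hbot.
  assert (Hbbot : hderiv_from L G (BoxArr a (Imp b Bot))).
  { apply (hf_box_block _ _ B); [exact HB|exact HBG|].
    apply hderiv_from_deduction; eapply hderiv_from_incl; [exact Hbot|solve_incl]. }
  apply (hf_mp_thm _ _ _ _ (h_A9 L c)), (hf_mp_thm _ _ _ _ (h_CNdia L a)).
  exact (hf_mp _ _ _ _ (hf_mp_thm _ _ _ _ (h_CKdia L a b Bot) Hbbot) (hf_hyp _ _ _ Hab)).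
Qed.

Lemma sderiv_sound L G D : sderiv L G D -> hderiv_seq L G D.
Proof.
  induction 1 as
    [G p G' HP | G D G' HP | G a b D G' _ IH HP | G a b _ IH1 _ IH2
    | G a b D G' _ IH1 _ IH2 HP | G a b _ IH | G a b _ IH | G a b _ IH
    | G a b D G' _ IH1 _ IH2 HP | G B a b G' _ HB _ IH HP | G B a b e t G' _ HB _ He _ IH HP
    | G B a b D G' _ HB _ IH HP | G a b D G' Hmp _ IH1 _ IH2 HP | G a b Hmp _ IH1 _ IH2]
    using sderiv_ind_unified; unfold hderiv_seq in *; cbn [big_or] in *;
    try pose proof (Permutation_incl _ _ HP) as HPi.
  - apply hf_hyp; solve_in.
  - apply (hf_mp_thm _ _ _ _ (h_A9 L _)), hf_hyp; solve_in.
  - apply (hderiv_from_subst _ _ _ _ IH); intros x [<-|[<-|Hx]].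
    + apply (hf_and1 _ _ _ b), hf_hyp; solve_in.
    + apply (hf_and2 _ _ a), hf_hyp; solve_in.
    + apply hf_hyp; solve_in.
  - exact (hf_and _ _ _ _ IH1 IH2).
  - apply (hf_or_elim _ _ a b); [apply hf_hyp; solve_in|..];
      eapply hderiv_from_incl; [exact IH1|solve_incl|exact IH2|solve_incl].
  - exact (hf_mp_thm _ _ _ _ (h_A6 L a b) IH).
  - exact (hf_mp_thm _ _ _ _ (h_A7 L a b) IH).
  - exact (hderiv_from_deduction _ _ _ _ IH).
  - assert (Ha : hderiv_from L G' a) by (eapply hderiv_from_incl; [exact IH1|solve_incl]).
    assert (Hb : hderiv_from L G' b) by (apply (hf_mp _ _ a); [apply hf_hyp; solve_in|exact Ha]).
    apply (hderiv_from_subst _ _ _ _ IH2); intros x [<-|Hx]; [exact Hb|apply hf_hyp; solve_in].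
  - apply (hf_box_block _ _ B); [exact HB|solve_incl|exact IH].
  - apply (hf_dia_block _ _ B a b); [solve_in|exact HB|solve_incl| |exact IH].
    exact (hderiv_iff_interderiv _ _ _ He).
  - apply (hf_boxdia_block _ _ B a b); [solve_in|exact HB|solve_incl|exact IH].
  - assert (Ha : hderiv_from L G' a) by (eapply hderiv_from_incl; [exact IH1|solve_incl]).
    assert (Hb : hderiv_from L G' b).
    { apply (hf_mp _ _ a); [|exact Ha].
      apply (hf_mp_thm _ _ _ _ (h_MPbox L a b Hmp)), hf_hyp; solve_in. }
    apply (hderiv_from_subst _ _ _ _ IH2); intros x [<-|[<-|Hx]];
      [apply hf_hyp; solve_in|exact Hb|apply hf_hyp; solve_in].
  - exact (hf_mp_thm _ _ _ _ (h_MPdia L a b Hmp) (hf_and _ _ _ _ IH1 IH2)).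
Qed.

(** * Completeness *)

Lemma sderiv_iff_interderiv L a r : sderiv L [] (Some (Iff a r)) <-> interderiv (sderiv L) a r.
Proof.
  split.
  - intros H.
    assert (Hiff : forall x, sderiv L [x] (Some (Iff a r)))
      by (intros x; eapply sderiv_incl; [exact H|intros y []]).
    split.
    + apply (sderiv_cut L (Iff a r) [a] [Iff a r; a]); [apply Hiff| |solve_incl].
      apply (andL_in L (Imp a r) (Imp r a)); [solve_in|].
      apply (impL_in L a r); [solve_in|apply sderiv_in; solve_in|apply sderiv_in, in_eq].
    + apply (sderiv_cut L (Iff a r) [r] [Iff a r; r]); [apply Hiff| |solve_incl].
      apply (andL_in L (Imp a r) (Imp r a)); [solve_in|].
      apply (impL_in L r a); [solve_in|apply sderiv_in; solve_in|apply sderiv_in, in_eq].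
  - intros [H1 H2]; apply s_andR; apply s_impR; assumption.
Qed.

Lemma sderiv_box_congr L a b r c :
  interderiv (sderiv L) a r -> interderiv (sderiv L) b c ->
  sderiv L [BoxArr a b] (Some (BoxArr r c)).
Proof.
  intros Har [Hbc _]; apply (box_in L [(a, b)]).
  - solve_incl.
  - intros r' s [[= <- <-]|[]]; exact (interderiv_sym _ _ _ Har).
  - eapply sderiv_incl; [exact Hbc|solve_incl].
Qed.

Lemma sderiv_dia_congr L a b e c :
  interderiv (sderiv L) a e -> interderiv (sderiv L) b c ->
  sderiv L [DiaArr a b] (Some (DiaArr e c)).
Proof.
  intros Hae [Hbc _]; apply (dia_in L [] a b); [solve_in|intros x []|intros r s []|exact Hae|].
  eapply sderiv_incl; [exact Hbc|solve_incl].
Qed.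

Lemma sderiv_CMbox L a b c :
  sderiv L [BoxArr a (And b c)] (Some (And (BoxArr a b) (BoxArr a c))).
Proof.
  apply s_andR; apply (box_in L [(a, And b c)]);
    try solve [solve_incl|intros r s [[= <- <-]|[]]; apply interderiv_refl];
    (apply (andL_in L b c); [solve_in|apply sderiv_in; solve_in]).
Qed.

Lemma sderiv_CCbox L a b c :
  sderiv L [And (BoxArr a b) (BoxArr a c)] (Some (BoxArr a (And b c))).
Proof.
  apply (andL_in L (BoxArr a b) (BoxArr a c)); [solve_in|].
  apply (box_in L [(a, b); (a, c)]).
  - solve_incl.
  - intros r s [[= <- <-]|[[= <- <-]|[]]]; apply interderiv_refl.
  - apply s_andR; apply sderiv_in; solve_in.
Qed.

Lemma sderiv_CKdia L a b c :
  sderiv L [DiaArr a b; BoxArr a (Imp b c)] (Some (DiaArr a c)).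
Proof.
  apply (dia_in L [(a, Imp b c)] a b); [solve_in|solve_incl| |apply interderiv_refl|].
  - intros r s [[= <- <-]|[]]; apply interderiv_refl.
  - apply (impL_in L b c); [solve_in|apply sderiv_in; solve_in|apply sderiv_in, in_eq].
Qed.

Lemma sderiv_complete L f : hderiv L f -> sderiv L [] (Some f).
Proof.
  induction 1 as [a b|a b c|a b|a b|a b|a b|a b|a b c|a|a b _ IH1 _ IH2|a b c|a b c|a|a|a b c
    |a r b _ IH|a b c _ IH|a r b _ IH|a b c _ IH|a Hid|a b Hmp|a b Hmp];
    repeat apply s_impR.
  - apply sderiv_in; solve_in.
  - apply (impL_in L a b); [solve_in|apply sderiv_in; solve_in|].
    apply (impL_in L a (Imp b c)); [solve_in|apply sderiv_in; solve_in|].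
    apply (impL_in L b c); [solve_in|apply sderiv_in; solve_in|apply sderiv_in, in_eq].
  - apply (andL_in L a b); [solve_in|apply sderiv_in; solve_in].
  - apply (andL_in L a b); [solve_in|apply sderiv_in; solve_in].
  - apply s_andR; apply sderiv_in; solve_in.
  - apply s_orR1, sderiv_in; solve_in.
  - apply s_orR2, sderiv_in; solve_in.
  - apply (orL_in L a b); [solve_in| |].
    + apply (impL_in L a c); [solve_in|apply sderiv_in; solve_in|apply sderiv_in, in_eq].
    + apply (impL_in L b c); [solve_in|apply sderiv_in; solve_in|apply sderiv_in, in_eq].
  - apply botL_in; solve_in.
  - apply (sderiv_cut L (Imp a b) [] [Imp a b]); [exact IH1| |solve_incl].
    apply (impL_in L a b); [solve_in| |apply sderiv_in, in_eq].
    eapply sderiv_incl; [exact IH2|solve_incl].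
  - apply sderiv_CMbox.
  - apply sderiv_CCbox.
  - apply (box_in L []); [intros x []|intros r s []|apply s_impR, botL_in, in_eq].
  - apply (boxdia_in L [] a Bot); [solve_in|intros x []|intros r s []|apply botL_in; solve_in].
  - apply sderiv_CKdia.
  - apply sderiv_iff_interderiv in IH; apply sderiv_iff_interderiv.
    split; apply sderiv_box_congr; auto using interderiv_sym, interderiv_refl.
  - apply sderiv_iff_interderiv in IH; apply sderiv_iff_interderiv.
    split; apply sderiv_box_congr; auto using interderiv_sym, interderiv_refl.
  - apply sderiv_iff_interderiv in IH; apply sderiv_iff_interderiv.
    split; apply sderiv_dia_congr; auto using interderiv_sym, interderiv_refl.
  - apply sderiv_iff_interderiv in IH; apply sderiv_iff_interderiv.
    split; apply sderiv_dia_congr; auto using interderiv_sym, interderiv_refl.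
  - apply (box_in L []); [intros x []|intros r s []|].
    rewrite id_hyp_true by exact Hid; apply sderiv_in, in_eq.
  - apply (mpbox_in L a b); [exact Hmp|solve_in|apply sderiv_in; solve_in|apply sderiv_in, in_eq].
  - apply (andL_in L a b); [solve_in|apply s_mp_dia; [exact Hmp|apply sderiv_in; solve_in..]].
Qed.

(** * The formula interpretation of sequents *)

Lemma sderiv_fold_left_And L G l y :
  sderiv L G (Some y) -> incl l G -> sderiv L G (Some (fold_left And l y)).
Proof.
  induction l as [|z l IH] in y |- *; intros Hy Hl; simpl; [exact Hy|].
  apply IH; [apply s_andR; [exact Hy|apply sderiv_in, Hl, in_eq]|].
  intros w Hw; apply Hl, in_cons, Hw.
Qed.

Lemma fold_left_And_sderiv L l y G D :
  sderiv L (y :: l ++ G) D -> sderiv L (fold_left And l y :: G) D.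
Proof.
  induction l as [|z l IH] in y |- *; intros Hd; simpl; [exact Hd|].
  apply IH; eapply (s_andL _ (l ++ G) y z); [exact Hd|reflexivity].
Qed.

Lemma sderiv_big_and L G : sderiv L G (Some (big_and G)).
Proof.
  destruct G as [|x l]; [apply s_impR, botL_in, in_eq|].
  apply sderiv_fold_left_And; [apply sderiv_in, in_eq|intros y Hy; apply in_cons, Hy].
Qed.

Lemma big_and_sderiv L G D : sderiv L G D -> sderiv L [big_and G] D.
Proof.
  destruct G as [|x l]; intros Hd; [exact (sderiv_weaken _ _ _ _ Hd)|].
  apply fold_left_And_sderiv; rewrite app_nil_r; exact Hd.
Qed.

Lemma sderiv_big_or L G D : sderiv L G D <-> sderiv L G (Some (big_or D)).
Proof.
  destruct D as [d|]; [reflexivity|split; intros Hd].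
  - exact (sderiv_empty_succ _ _ _ Hd).
  - apply (sderiv_cut L Bot G [Bot] None Hd); [apply botL_in, in_eq|solve_incl].
Qed.

Lemma sderiv_iota L G D : sderiv L G D <-> sderiv L [] (Some (iota G D)).
Proof.
  rewrite sderiv_big_or; destruct G as [|x l]; [reflexivity|split; intros Hd].
  - apply s_impR, (big_and_sderiv _ (x :: l)), Hd.
  - apply (sderiv_cut L (iota (x :: l) D) (x :: l) (iota (x :: l) D :: x :: l));
      [eapply sderiv_incl; [exact Hd|intros y []]| |solve_incl].
    apply (impL_in L (big_and (x :: l)) (big_or D)); [apply in_eq| |apply sderiv_in, in_eq].
    apply sderiv_weaken, sderiv_big_and.
Qed.

Lemma sderiv_nil_iff_hderiv L f : sderiv L [] (Some f) <-> hderiv L f.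
Proof.
  split; [|apply sderiv_complete].
  intros Hd; exact (hderiv_from_nil _ _ (sderiv_sound _ _ _ Hd)).
Qed.

Theorem theorem11 (L : logic) (G : list form) (D : option form) :
  sderiv L G D <-> hderiv L (iota G D).
Proof. rewrite sderiv_iota; apply sderiv_nil_iff_hderiv. Qed.
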